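(* Let $G:[0,\infty)\to\mathbb{C}$ be continuous, let $H_S^{(0)},H_S^{(2)}$ be Hermitian $N\times N$ matrices, $\lambda>0$, and let $W_\lambda(t)=V_\lambda(\lambda^{-2}t)$, where $V_\lambda$ is the $N\times N$ matrix-valued solution of $$\frac{d}{dt}V_\lambda(t)=-\lambda^2\int_0^t ds\,G(t-s)\,e^{i(H_S^{(0)}+\lambda^2H_S^{(2)})(t-s)}V_\lambda(s),\qquad V_\lambda(0)=I.$$ Define the Laplace transforms $\tilde W_\lambda(p)=\int_0^\infty e^{-pt}W_\lambda(t)\,dt$ and $\tilde G(p)=\int_0^\infty e^{-pt}G(t)\,dt$. Then (for $p$ at which the Laplace integrals involved converge) $$\tilde W_\lambda(p)=\Big(p+\tilde G\big(-iH_S^{(0)}+\lambda^2(p-iH_S^{(2)})\big)\Big)^{-1}.$$ Here the matrix function is defined through the Hermitian matrix $H_S=H_S^{(0)}+\lambda^2H_S^{(2)}$: if $H_S=U\,\mathrm{diag}\{E_\alpha\}U^\dagger$ with $U$ unitary, then $$\Big(p+\tilde G(-iH_S+\lambda^2p)\Big)^{-1}=U\,\mathrm{diag}\Big\{\frac{1}{p+\tilde G(-iE_\alpha+\lambda^2p)}\Big\}U^\dagger.$$ *)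

From Stdlib Require Import Reals.
From Coquelicot Require Export Coquelicot.
Open Scope R_scope.

Definition cexp (z : C) : C :=
  (exp (fst z) * cos (snd z), exp (fst z) * sin (snd z)).

(* N x N complex matrices are represented as functions nat -> nat -> C;
   only the entries with indices < N are meaningful. *)
Definition Mat := nat -> nat -> C.

Fixpoint csum (n : nat) (f : nat -> C) : C :=
  match n with
  | O => RtoC 0
  | S n' => Cplus (csum n' f) (f n')
  end.

Definition mmul (N : nat) (A B : Mat) : Mat :=
  fun i j => csum N (fun k => Cmult (A i k) (B k j)).

Definition madj (A : Mat) : Mat := fun i j => Cconj (A j i).

Definition mid : Mat := fun i j => if Nat.eqb i j then RtoC 1 else RtoC 0.

Definition mdiag (d : nat -> C) : Mat :=
  fun i j => if Nat.eqb i j then d i else RtoC 0.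

Definition madd (A B : Mat) : Mat := fun i j => Cplus (A i j) (B i j).
Definition mscal (c : C) (A : Mat) : Mat := fun i j => Cmult c (A i j).

Definition meq (N : nat) (A B : Mat) : Prop :=
  forall i j, (i < N)%nat -> (j < N)%nat -> A i j = B i j.

Definition hermitian (N : nat) (A : Mat) : Prop := meq N A (madj A).

Definition unitary (N : nat) (U : Mat) : Prop :=
  meq N (mmul N U (madj U)) mid /\ meq N (mmul N (madj U) U) mid.

(* Functional calculus for a Hermitian matrix H = U diag(E) U^dagger:
   f(H) := U diag(f(E_alpha)) U^dagger. *)
Definition mfun (N : nat) (U : Mat) (E : nat -> R) (f : R -> C) : Mat :=
  mmul N (mmul N U (mdiag (fun a => f (E a)))) (madj U).

Definition laplace_integrand (f : R -> C) (s : C) : R -> C :=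
  fun t => Cmult (cexp (Copp (Cmult s (RtoC t)))) (f t).

Definition laplace (f : R -> C) (s : C) : C :=
  @RInt_gen C_R_CompleteNormedModule (laplace_integrand f s)
    (at_point 0) (Rbar_locally p_infty).

Definition laplace_abs_conv (f : R -> C) (s : C) : Prop :=
  ex_RInt_gen (fun t => Cmod (laplace_integrand f s t))
    (at_point 0) (Rbar_locally p_infty).

Definition continuous_on_nonneg (f : R -> C) : Prop :=
  forall t, 0 <= t ->
    filterlim f (within (fun s => 0 <= s) (locally t)) (@locally C_UniformSpace (f t)).

Definition expiH (N : nat) (U : Mat) (E : nat -> R) (tau : R) : Mat :=
  mfun N U E (fun e => cexp (0, e * tau)).

Definition is_solution (N : nat) (G : R -> C) (U : Mat) (E : nat -> R)
    (lam : R) (V : R -> Mat) : Prop :=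
  meq N (V 0) mid /\
  (forall i j, (i < N)%nat -> (j < N)%nat -> continuous_on_nonneg (fun t => V t i j)) /\
  (forall t, 0 < t -> forall i j, (i < N)%nat -> (j < N)%nat ->
     exists D : C,
       @is_RInt C_R_NormedModule
         (fun s => Cmult (G (t - s)) (mmul N (expiH N U E (t - s)) (V s) i j)) 0 t D /\
       @is_derive R_AbsRing C_R_NormedModule (fun tau => V tau i j) t
         (Cmult (RtoC (- lam ^ 2)) D)).

(* Substituting t = lam^2 t' turns the Laplace transform of W_lam at p into lam^2 times the
   Laplace transform of V at s = lam^2 p.  In the eigenbasis of H_S the equation decouples:
   y_a = (U^dagger V)_{aj} solves the scalar Volterra equation y' = -lam^2 (g_a * y) with
   g_a(t) = G(t) e^{i E_a t}, whose Laplace transform at s is G~(s - i E_a).  For such an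
   equation e^{-sT} y(T) equals
     y(0) - s int_0^T e^{-st} y(t) dt - lam^2 int_0^T e^{-su} y(u) int_0^{T-u} e^{-sr} g(r) dr du,
   since both sides have the same derivative in T.  By absolute convergence the right-hand side
   tends to y(0) - s y~ - lam^2 g~ y~, and an absolutely integrable function can only tend to 0.
   Hence lam^2 (p + G~(s - i E_a)) y~_a(s) = y_a(0) = conj U_{ja}, and conjugating back by U
   gives the stated matrix function. *)

From Stdlib Require Import Reals Lra Lia FunctionalExtensionality.
From Coquelicot Require Import Coquelicot.
Open Scope R_scope.

Notation is_derive_C := (@is_derive R_AbsRing C_R_NormedModule).
Notation is_RInt_C := (@is_RInt C_R_NormedModule).
Notation ex_RInt_C := (@ex_RInt C_R_NormedModule).
Notation RInt_C := (@RInt C_R_CompleteNormedModule).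
Notation is_RInt_gen_C := (@is_RInt_gen C_R_NormedModule).

(* [ring] reads the carrier off the left-hand side, whose type may be a structure projection
   (e.g. the sort of C_R_CompleteNormedModule); [change] fixes it, and [symmetry] covers a
   left-hand side that is a single atom. *)
Ltac Cring :=
  match goal with |- ?A = ?B => change (@eq C A B) end; cbv beta; first [ring | symmetry; ring].
Ltac Rring :=
  match goal with |- ?A = ?B => change (@eq R A B) end; cbv beta; first [ring | symmetry; ring].

(** * Complex-valued functions of a real variable *)

Lemma norm_C_R (z : C) : @norm R_AbsRing C_R_NormedModule z = Cmod z.
Proof.
  destruct z as [x y]; unfold Cmod, norm; simpl; unfold prod_norm, norm, abs; simpl.
  rewrite !Rmult_1_r, <- !Rabs_mult, !Rabs_right by (apply Rle_ge, Rle_0_sqr).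
  reflexivity.
Qed.

Lemma scal_C_R (r : R) (z : C) : @scal R_Ring C_R_NormedModule r z = (r * z)%C.
Proof.
  destruct z; unfold Cmult, RtoC, scal; simpl; unfold prod_scal, scal; simpl; unfold mult; simpl.
  f_equal; ring.
Qed.

Section ComplexContinuity.
Context {U : UniformSpace}.

Lemma continuous_C_pair (f : U -> C) x :
  continuous (fun t => fst (f t)) x -> continuous (fun t => snd (f t)) x -> continuous f x.
Proof.
  intros H1 H2; apply filterlim_locally; intros eps.
  apply filterlim_locally with (eps := eps) in H1.
  apply filterlim_locally with (eps := eps) in H2.
  generalize (filter_and _ _ H1 H2); apply filter_imp.
  intros t [h1 h2]; split; assumption.
Qed.

Lemma continuous_Cfst (f : U -> C) x : continuous f x -> continuous (fun t => fst (f t)) x.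
Proof. intros H; apply (continuous_comp f fst); [exact H | apply continuous_fst]. Qed.

Lemma continuous_Csnd (f : U -> C) x : continuous f x -> continuous (fun t => snd (f t)) x.
Proof. intros H; apply (continuous_comp f snd); [exact H | apply continuous_snd]. Qed.

Lemma continuous_Cplus (f g : U -> C) x :
  continuous f x -> continuous g x -> continuous (fun t => (f t + g t)%C) x.
Proof. intros H1 H2; exact (continuous_plus (V := C_R_NormedModule) _ _ _ H1 H2). Qed.

Lemma continuous_Cminus (f g : U -> C) x :
  continuous f x -> continuous g x -> continuous (fun t => (f t - g t)%C) x.
Proof. intros H1 H2; exact (continuous_minus (V := C_R_NormedModule) _ _ _ H1 H2). Qed.

Lemma continuous_Cmult (f g : U -> C) x :
  continuous f x -> continuous g x -> continuous (fun t => (f t * g t)%C) x.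
Proof.
  intros Hf Hg.
  pose proof (continuous_Cfst _ _ Hf) as F1; pose proof (continuous_Csnd _ _ Hf) as F2.
  pose proof (continuous_Cfst _ _ Hg) as G1; pose proof (continuous_Csnd _ _ Hg) as G2.
  apply continuous_C_pair.
  - eapply continuous_ext;
      [| exact (continuous_minus _ _ _ (continuous_mult _ _ _ F1 G1)
                                       (continuous_mult _ _ _ F2 G2))].
    intro t; simpl; destruct (f t), (g t); reflexivity.
  - eapply continuous_ext;
      [| exact (continuous_plus _ _ _ (continuous_mult _ _ _ F1 G2) (continuous_mult _ _ _ F2 G1))].
    intro t; simpl; destruct (f t), (g t); reflexivity.
Qed.

Lemma continuous_Cmod (f : U -> C) x : continuous f x -> continuous (fun t => Cmod (f t)) x.
Proof.
  intros H; unfold Cmod.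
  apply (continuous_comp (fun t => fst (f t) ^ 2 + snd (f t) ^ 2) sqrt); [| apply continuous_sqrt].
  pose proof (continuous_Cfst _ _ H) as H1; pose proof (continuous_Csnd _ _ H) as H2.
  eapply continuous_ext;
    [| exact (continuous_plus (V := R_NormedModule) _ _ _
                (continuous_mult _ _ _ H1 H1) (continuous_mult _ _ _ H2 H2))].
  intros t; simpl; unfold plus, mult; simpl; ring.
Qed.

End ComplexContinuity.

Lemma is_derive_ext_eq {K : AbsRing} {V : NormedModule K} (f g : K -> V) x l l' :
  (forall t, f t = g t) -> l = l' -> is_derive f x l -> is_derive g x l'.
Proof. intros H1 <- H3; exact (is_derive_ext f g x l H1 H3). Qed.

Lemma is_derive_C_pair (f : R -> C) x (l : C) :
  is_derive (fun t => fst (f t)) x (fst l) -> is_derive (fun t => snd (f t)) x (snd l) ->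
  is_derive_C f x l.
Proof.
  intros H1 H2.
  replace f with (fun t => (fst (f t), snd (f t)))
    by (apply functional_extensionality; intro t; destruct (f t); reflexivity).
  destruct l as [l1 l2]; unfold is_derive in *.
  apply (filterdiff_comp'_2 (fun t => fst (f t)) (fun t => snd (f t)) (fun u v => (u, v)) x
           (fun y => scal y l1) (fun y => scal y l2) (fun u v => (u, v)) H1 H2).
  apply filterdiff_linear; split.
  - intros [] []; reflexivity.
  - intros k []; reflexivity.
  - exists 1; split; [lra | intros [a b]; rewrite Rmult_1_l; apply Rle_refl].
Qed.

Lemma is_derive_Cfst (f : R -> C) x (l : C) :
  is_derive_C f x l -> is_derive (fun t => fst (f t)) x (fst l).
Proof.
  intros H; apply (filterdiff_comp f fst (fun y => scal y l) fst H).
  apply filterdiff_linear, is_linear_fst.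
Qed.

Lemma is_derive_Csnd (f : R -> C) x (l : C) :
  is_derive_C f x l -> is_derive (fun t => snd (f t)) x (snd l).
Proof.
  intros H; apply (filterdiff_comp f snd (fun y => scal y l) snd H).
  apply filterdiff_linear, is_linear_snd.
Qed.

Lemma is_derive_Cconst (k : C) x : is_derive_C (fun _ => k) x (RtoC 0).
Proof. apply is_derive_C_pair; simpl; auto_derive; auto. Qed.

Lemma is_derive_Cplus (f g : R -> C) x df dg :
  is_derive_C f x df -> is_derive_C g x dg -> is_derive_C (fun t => (f t + g t)%C) x (df + dg)%C.
Proof. intros H1 H2; exact (is_derive_plus _ _ _ _ _ H1 H2). Qed.

Lemma is_derive_Cmult (f g : R -> C) x df dg :
  is_derive_C f x df -> is_derive_C g x dg ->
  is_derive_C (fun t => (f t * g t)%C) x (df * g x + f x * dg)%C.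
Proof.
  intros Hf Hg.
  pose proof (is_derive_Cfst _ _ _ Hf) as F1; pose proof (is_derive_Csnd _ _ _ Hf) as F2.
  pose proof (is_derive_Cfst _ _ _ Hg) as G1; pose proof (is_derive_Csnd _ _ _ Hg) as G2.
  apply is_derive_C_pair.
  - eapply is_derive_ext_eq;
      [| | exact (is_derive_minus _ _ _ _ _ (Derive.is_derive_mult _ _ _ _ _ F1 G1)
                                      (Derive.is_derive_mult _ _ _ _ _ F2 G2))].
    + intro t; simpl; destruct (f t), (g t); reflexivity.
    + destruct df, dg; simpl; destruct (f x), (g x); simpl; unfold minus, plus, opp; simpl; ring.
  - eapply is_derive_ext_eq;
      [| | exact (is_derive_plus _ _ _ _ _ (Derive.is_derive_mult _ _ _ _ _ F1 G2)
                                     (Derive.is_derive_mult _ _ _ _ _ F2 G1))].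
    + intro t; simpl; destruct (f t), (g t); reflexivity.
    + destruct df, dg; simpl; destruct (f x), (g x); simpl; unfold plus; simpl; ring.
Qed.

Lemma is_derive_Cscal (k : C) (f : R -> C) x d :
  is_derive_C f x d -> is_derive_C (fun t => (k * f t)%C) x (k * d)%C.
Proof.
  intros H; eapply is_derive_ext_eq;
    [intro; reflexivity | | exact (is_derive_Cmult _ _ _ _ _ (is_derive_Cconst k x) H)].
  Cring.
Qed.

Lemma is_derive_C_zero_const (f : R -> C) :
  (forall x, continuous f x) -> (forall x, 0 < x -> is_derive_C f x (RtoC 0)) ->
  forall T, 0 <= T -> f T = f 0.
Proof.
  intros Hc Hd T HT.
  destruct (Req_dec T 0) as [-> | HT0]; [reflexivity |].
  assert (Hreal : forall h : R -> R, (forall x, continuous h x) ->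
                    (forall x, 0 < x -> is_derive h x 0) -> h T = h 0).
  { intros h Hh Hhd.
    destruct (MVT_gen h 0 T (fun _ => 0)) as [c [_ Hc0]].
    - intros x Hx; apply Hhd; rewrite Rmin_left in Hx by lra; lra.
    - intros x _; apply continuity_pt_filterlim, Hh.
    - lra. }
  pose proof (Hreal (fun t => fst (f t)) (fun x => continuous_Cfst _ _ (Hc x))
                (fun x Hx => is_derive_Cfst _ _ _ (Hd x Hx))) as E1.
  pose proof (Hreal (fun t => snd (f t)) (fun x => continuous_Csnd _ _ (Hc x))
                (fun x Hx => is_derive_Csnd _ _ _ (Hd x Hx))) as E2.
  simpl in E1, E2; destruct (f T), (f 0); simpl in *; subst; reflexivity.
Qed.

Lemma is_RInt_ext_eq {V : NormedModule R_AbsRing} (f g : R -> V) a b l l' :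
  (forall t, f t = g t) -> l = l' -> is_RInt f a b l -> is_RInt g a b l'.
Proof. intros H1 <- H3; eapply is_RInt_ext; [intros; apply H1 | exact H3]. Qed.

Lemma is_RInt_C_pair (f : R -> C) a b (l : C) :
  is_RInt (fun t => fst (f t)) a b (fst l) -> is_RInt (fun t => snd (f t)) a b (snd l) ->
  is_RInt_C f a b l.
Proof. destruct l; apply is_RInt_fct_extend_pair. Qed.

Lemma is_RInt_Cscal (k : C) (f : R -> C) a b (l : C) :
  is_RInt_C f a b l -> is_RInt_C (fun t => (k * f t)%C) a b (k * l)%C.
Proof.
  intros H.
  pose proof (is_RInt_fct_extend_fst f a b l H) as H1.
  pose proof (is_RInt_fct_extend_snd f a b l H) as H2.
  apply is_RInt_C_pair.
  - eapply is_RInt_ext_eq;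
      [| | exact (is_RInt_minus _ _ _ _ _ _ (is_RInt_scal _ _ _ (fst k) _ H1)
                                          (is_RInt_scal _ _ _ (snd k) _ H2))].
    + intro t; simpl; destruct k, (f t); reflexivity.
    + destruct k, l; reflexivity.
  - eapply is_RInt_ext_eq;
      [| | exact (is_RInt_plus _ _ _ _ _ _ (is_RInt_scal _ _ _ (fst k) _ H2)
                                         (is_RInt_scal _ _ _ (snd k) _ H1))].
    + intro t; simpl; destruct k, (f t); reflexivity.
    + destruct k, l; reflexivity.
Qed.

Lemma ex_RInt_of_continuous (f : R -> R) a b : (forall x, continuous f x) -> ex_RInt f a b.
Proof. intros H; apply (ex_RInt_continuous (V := R_CompleteNormedModule)); intros; apply H. Qed.

Lemma is_RInt_of_continuous (f : R -> R) a b :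
  (forall x, continuous f x) -> is_RInt f a b (RInt f a b).
Proof. intros H; apply (RInt_correct (V := R_CompleteNormedModule)), ex_RInt_of_continuous, H. Qed.

Lemma ex_RInt_C_of_continuous (f : R -> C) a b : (forall x, continuous f x) -> ex_RInt_C f a b.
Proof. intros H; apply (ex_RInt_continuous (V := C_R_CompleteNormedModule)); intros; apply H. Qed.

Lemma is_RInt_C_of_continuous (f : R -> C) a b :
  (forall x, continuous f x) -> is_RInt_C f a b (RInt_C f a b).
Proof.
  intros H; apply (RInt_correct (V := C_R_CompleteNormedModule)), ex_RInt_C_of_continuous, H.
Qed.

Lemma RInt_Chasles_of_continuous (f : R -> R) a b c :
  (forall x, continuous f x) -> RInt f a b + RInt f b c = RInt f a c.
Proof.
  intros H; apply (RInt_Chasles (V := R_CompleteNormedModule)); apply ex_RInt_of_continuous, H.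
Qed.

Lemma RInt_C_Chasles_of_continuous (f : R -> C) a b c :
  (forall x, continuous f x) -> (RInt_C f a b + RInt_C f b c)%C = RInt_C f a c.
Proof.
  intros H; apply (RInt_Chasles (V := C_R_CompleteNormedModule));
    apply ex_RInt_C_of_continuous, H.
Qed.

Lemma RInt_C_minus_of_continuous (f g : R -> C) a b :
  (forall x, continuous f x) -> (forall x, continuous g x) ->
  RInt_C (fun u => (f u - g u)%C) a b = (RInt_C f a b - RInt_C g a b)%C.
Proof.
  intros Hf Hg; apply is_RInt_unique.
  apply (is_RInt_minus (V := C_R_NormedModule)); apply is_RInt_C_of_continuous; assumption.
Qed.

Lemma RInt_C_scal_of_continuous (k : C) (f : R -> C) a b :
  (forall x, continuous f x) -> RInt_C (fun u => (k * f u)%C) a b = (k * RInt_C f a b)%C.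
Proof. intros Hf; apply is_RInt_unique, is_RInt_Cscal, is_RInt_C_of_continuous, Hf. Qed.

Lemma RInt_scal_r_of_continuous (f : R -> R) (d : R) a b :
  (forall x, continuous f x) -> RInt (fun u => f u * d) a b = RInt f a b * d.
Proof.
  intros Hf; transitivity (RInt (fun u => scal d (f u)) a b).
  - apply RInt_ext; intros; unfold scal; simpl; unfold mult; simpl; ring.
  - etransitivity;
      [exact (RInt_scal (V := R_CompleteNormedModule) f a b d (ex_RInt_of_continuous f a b Hf)) |].
    unfold scal; simpl; unfold mult; simpl; ring.
Qed.

Lemma Cmod_RInt_C_le (f : R -> C) (g : R -> R) a b :
  a <= b -> (forall x, continuous f x) -> (forall x, continuous g x) ->
  (forall x, a <= x <= b -> Cmod (f x) <= g x) -> Cmod (RInt_C f a b) <= RInt g a b.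
Proof.
  intros Hab Hf Hg Hb; rewrite <- norm_C_R.
  apply (norm_RInt_le (V := C_R_NormedModule) f g a b); auto.
  - intros x Hx; rewrite norm_C_R; apply Hb; lra.
  - apply is_RInt_C_of_continuous, Hf.
  - apply is_RInt_of_continuous, Hg.
Qed.

Lemma Cmod_RInt_C_mult_le (f h : R -> C) u v m :
  u <= v -> (forall x, continuous f x) -> (forall x, continuous h x) ->
  (forall x, u <= x <= v -> Cmod (h x) <= m) ->
  Cmod (RInt_C (fun x => f x * h x)%C u v) <= RInt (fun x => Cmod (f x)) u v * m.
Proof.
  intros Huv Hf Hh Hm.
  assert (Hk : forall x, continuous (fun x => Cmod (f x)) x) by (intros; apply continuous_Cmod, Hf).
  rewrite <- RInt_scal_r_of_continuous by exact Hk.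
  apply Cmod_RInt_C_le; [exact Huv | intros; apply continuous_Cmult; auto | |].
  - intros; apply (continuous_mult (K := R_AbsRing)); [apply Hk | apply continuous_const].
  - intros x Hx; rewrite Cmod_mult; apply Rmult_le_compat_l; [apply Cmod_ge_0 | apply Hm, Hx].
Qed.

Lemma continuous_RInt_C_of_continuous (f : R -> C) a x :
  (forall x, continuous f x) -> continuous (fun T => RInt_C f a T) x.
Proof.
  intros Hf; apply (continuous_RInt_1 (V := C_R_NormedModule) f a x (fun T => RInt_C f a T)).
  apply filter_forall; intros; apply is_RInt_C_of_continuous, Hf.
Qed.

Lemma is_derive_RInt_C_of_continuous (f : R -> C) x :
  (forall x, continuous f x) -> is_derive_C (fun T => RInt_C f 0 T) x (f x).
Proof.
  intros Hf; apply (is_derive_RInt (V := C_R_NormedModule) f _ 0 x); [| apply Hf].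
  apply filter_forall; intros; apply is_RInt_C_of_continuous, Hf.
Qed.

Lemma RInt_nondecreasing_of_nonneg (f : R -> R) u v :
  (forall x, continuous f x) -> (forall x, 0 <= x -> 0 <= f x) -> 0 <= u <= v ->
  RInt f 0 u <= RInt f 0 v.
Proof.
  intros Hc Hp Huv; rewrite <- (RInt_Chasles_of_continuous f 0 u v Hc).
  assert (0 <= RInt f u v).
  { apply RInt_ge_0; [lra | apply ex_RInt_of_continuous, Hc | intros; apply Hp; lra]. }
  lra.
Qed.

Lemma Cmod_RInt_C_diff_le (f : R -> C) u v :
  (forall x, continuous f x) -> u <= v ->
  Cmod (RInt_C f 0 v - RInt_C f 0 u)%C
    <= RInt (fun t => Cmod (f t)) 0 v - RInt (fun t => Cmod (f t)) 0 u.
Proof.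
  intros Hf Huv; set (k := fun t => Cmod (f t)).
  assert (Hk : forall x, continuous k x) by (intros; apply continuous_Cmod, Hf).
  rewrite <- (RInt_C_Chasles_of_continuous f 0 u v Hf), <- (RInt_Chasles_of_continuous k 0 u v Hk).
  replace (RInt_C f 0 u + RInt_C f u v - RInt_C f 0 u)%C with (RInt_C f u v) by Cring.
  replace (RInt k 0 u + RInt k u v - RInt k 0 u) with (RInt k u v) by Rring.
  apply Cmod_RInt_C_le; auto; intros; apply Rle_refl.
Qed.

Lemma csum_ext n (f g : nat -> C) : (forall k, (k < n)%nat -> f k = g k) -> csum n f = csum n g.
Proof. induction n; simpl; intros H; auto. rewrite IHn, H; auto; intros; apply H; lia. Qed.

Lemma csum_zero n : csum n (fun _ => RtoC 0) = RtoC 0.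
Proof. induction n; simpl; [reflexivity | rewrite IHn; Cring]. Qed.

Lemma csum_plus n (f g : nat -> C) : csum n (fun k => f k + g k)%C = (csum n f + csum n g)%C.
Proof. induction n; simpl; [Cring | rewrite IHn; Cring]. Qed.

Lemma csum_scal_l n (c : C) (f : nat -> C) : csum n (fun k => c * f k)%C = (c * csum n f)%C.
Proof. induction n; simpl; [Cring | rewrite IHn; Cring]. Qed.

Lemma csum_scal_r n (c : C) (f : nat -> C) : csum n (fun k => f k * c)%C = (csum n f * c)%C.
Proof. induction n; simpl; [Cring | rewrite IHn; Cring]. Qed.

Lemma csum_swap n m (f : nat -> nat -> C) :
  csum n (fun k => csum m (fun l => f k l)) = csum m (fun l => csum n (fun k => f k l)).
Proof.
  induction n; simpl; [rewrite csum_zero; reflexivity |].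
  rewrite IHn, <- csum_plus; reflexivity.
Qed.

Lemma csum_delta n i (x : nat -> C) :
  (i < n)%nat -> csum n (fun k => if Nat.eqb i k then x k else RtoC 0) = x i.
Proof.
  induction n; simpl; intros H; [lia |].
  destruct (Nat.eqb i n) eqn:E.
  - apply Nat.eqb_eq in E; subst.
    rewrite (csum_ext _ _ (fun _ => RtoC 0)), csum_zero; [Cring |].
    intros k Hk; destruct (Nat.eqb n k) eqn:E2; auto; apply Nat.eqb_eq in E2; lia.
  - apply Nat.eqb_neq in E; rewrite IHn by lia; Cring.
Qed.

Lemma csum_delta_r n i (x : nat -> C) :
  (i < n)%nat -> csum n (fun k => if Nat.eqb k i then x k else RtoC 0) = x i.
Proof.
  intros H; rewrite <- (csum_delta n i x H); apply csum_ext; intros k _.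
  rewrite Nat.eqb_sym; reflexivity.
Qed.

Lemma csum_continuous {U : UniformSpace} (n : nat) (f : nat -> U -> C) x :
  (forall k, (k < n)%nat -> continuous (f k) x) -> continuous (fun t => csum n (fun k => f k t)) x.
Proof.
  induction n; simpl; intros H; [apply continuous_const |].
  apply continuous_Cplus; [apply IHn; intros; apply H; lia | apply H; lia].
Qed.

Lemma is_derive_csum (n : nat) (f : nat -> R -> C) (d : nat -> C) x :
  (forall k, (k < n)%nat -> is_derive_C (f k) x (d k)) ->
  is_derive_C (fun t => csum n (fun k => f k t)) x (csum n d).
Proof.
  induction n; simpl; intros H; [apply is_derive_Cconst |].
  apply is_derive_Cplus; [apply IHn; intros; apply H; lia | apply H; lia].
Qed.

Lemma is_RInt_C_csum (n : nat) (f : nat -> R -> C) (l : nat -> C) a b :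
  (forall k, (k < n)%nat -> is_RInt_C (f k) a b (l k)) ->
  is_RInt_C (fun t => csum n (fun k => f k t)) a b (csum n l).
Proof.
  induction n; simpl; intros H.
  - eapply is_RInt_ext_eq; [intro; reflexivity | | apply (is_RInt_const (V := C_R_NormedModule))].
    rewrite scal_C_R; Cring.
  - apply (is_RInt_plus (V := C_R_NormedModule)); [apply IHn; intros; apply H; lia | apply H; lia].
Qed.

(* [laplace_integrand f s t] is convertible to [laplace_kernel s t * f t]. *)
Definition laplace_kernel (s : C) (t : R) : C := cexp (- (s * t))%C.

Lemma cexp_plus (z w : C) : cexp (z + w)%C = (cexp z * cexp w)%C.
Proof.
  destruct z as [z1 z2], w as [w1 w2]; unfold cexp, Cplus, Cmult; simpl.
  rewrite exp_plus, cos_plus, sin_plus; f_equal; ring.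
Qed.

Lemma laplace_kernel_plus (s : C) u v :
  (laplace_kernel s u * laplace_kernel s v)%C = laplace_kernel s (u + v).
Proof.
  unfold laplace_kernel; rewrite <- cexp_plus; f_equal.
  destruct s; unfold Copp, Cmult, Cplus, RtoC; simpl; f_equal; ring.
Qed.

Lemma laplace_kernel_0 (s : C) : laplace_kernel s 0 = RtoC 1.
Proof.
  destruct s as [s1 s2]; unfold laplace_kernel, cexp, Copp, Cmult, RtoC; simpl.
  rewrite !Rmult_0_r, Rminus_0_r, Rplus_0_r, Ropp_0, exp_0, cos_0, sin_0; f_equal; ring.
Qed.

Lemma is_derive_laplace_kernel (s : C) t :
  is_derive_C (laplace_kernel s) t (- s * laplace_kernel s t)%C.
Proof.
  destruct s as [s1 s2].
  assert (E : forall t, laplace_kernel (s1, s2) t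
                = (exp (- (s1 * t)) * cos (- (s2 * t)), exp (- (s1 * t)) * sin (- (s2 * t)))).
  { intros u; unfold laplace_kernel, cexp, Copp, Cmult, RtoC; simpl.
    do 2 f_equal; f_equal; ring. }
  eapply is_derive_ext_eq; [intros; symmetry; apply E | reflexivity |].
  apply is_derive_C_pair; rewrite E; simpl; auto_derive; auto; ring.
Qed.

Lemma continuous_laplace_kernel (s : C) t : continuous (laplace_kernel s) t.
Proof.
  apply (ex_derive_continuous (K := R_AbsRing) (V := C_R_NormedModule)).
  eexists; apply is_derive_laplace_kernel.
Qed.

Lemma continuous_laplace_integrand (f : R -> C) s :
  (forall x, continuous f x) -> forall x, continuous (laplace_integrand f s) x.
Proof. intros Hf x; apply continuous_Cmult; [apply continuous_laplace_kernel | apply Hf]. Qed.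

Lemma continuous_cexp_imag (e : R) x : continuous (fun t => cexp (0, e * t)) x.
Proof.
  apply continuous_C_pair; simpl;
    apply (ex_derive_continuous (K := R_AbsRing) (V := R_NormedModule)); auto_derive; auto.
Qed.

(** * Improper integrals on [0, +oo) *)

Section ImproperIntegrals.
Context {V : CompleteNormedModule R_AbsRing}.

Lemma filterlim_RInt_of_is_RInt_gen (f : R -> V) (l : V) :
  is_RInt_gen f (at_point 0) (Rbar_locally p_infty) l ->
  filterlim (fun T => RInt f 0 T) (Rbar_locally p_infty) (locally l).
Proof.
  intros H P HP.
  destruct (H P HP) as [Q R HQ [M HM] HQR].
  exists M; intros T HT.
  destruct (HQR 0 T HQ (HM T HT)) as [v [Hv HPv]]; simpl in Hv.
  rewrite (is_RInt_unique _ _ _ _ Hv); exact HPv.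
Qed.

Lemma is_RInt_gen_of_filterlim_RInt (f : R -> V) (l : V) :
  (forall T, 0 <= T -> ex_RInt f 0 T) ->
  filterlim (fun T => RInt f 0 T) (Rbar_locally p_infty) (locally l) ->
  is_RInt_gen f (at_point 0) (Rbar_locally p_infty) l.
Proof.
  intros Hex H P HP.
  destruct (H P HP) as [M HM].
  apply Filter_prod with (Q := fun x => x = 0) (R := fun y => Rmax M 0 < y).
  - reflexivity.
  - exists (Rmax M 0); auto.
  - intros x y -> Hy; exists (RInt f 0 y); split.
    + apply RInt_correct, Hex; pose proof (Rmax_r M 0); lra.
    + apply HM; pose proof (Rmax_l M 0); lra.
Qed.

Lemma is_RInt_gen_zero :
  is_RInt_gen (fun _ => @zero V) (at_point 0) (Rbar_locally p_infty) zero.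
Proof.
  apply is_RInt_gen_of_filterlim_RInt.
  - intros T _; eexists; apply is_RInt_const.
  - eapply filterlim_ext; [| apply filterlim_const].
    intros T; symmetry; apply is_RInt_unique.
    eapply is_RInt_ext_eq; [intros; reflexivity | | apply is_RInt_const].
    exact (@scal_zero_r R_Ring V _).
Qed.

Lemma ex_filterlim_RInt_dominated (f : R -> V) (k : R -> R) (K : R) :
  (forall T, 0 <= T -> ex_RInt f 0 T) -> (forall T, 0 <= T -> ex_RInt k 0 T) ->
  (forall t, 0 <= t -> norm (f t) <= k t) ->
  filterlim (fun T => RInt k 0 T) (Rbar_locally p_infty) (locally K) ->
  exists l, filterlim (fun T => RInt f 0 T) (Rbar_locally p_infty) (locally l).
Proof.
  intros Hf Hk Hb HK.
  assert (Hinc : forall a b, 0 <= a -> a <= b ->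
            norm (minus (RInt f 0 b) (RInt f 0 a)) <= RInt k 0 b - RInt k 0 a).
  { intros a b Ha Hab.
    assert (C1 := is_RInt_Chasles f a 0 b _ _
                    (is_RInt_swap _ _ _ _ (RInt_correct f 0 a (Hf a Ha)))
                    (RInt_correct f 0 b (Hf b ltac:(lra)))).
    assert (C2 := is_RInt_Chasles k a 0 b _ _
                    (is_RInt_swap _ _ _ _ (RInt_correct k 0 a (Hk a Ha)))
                    (RInt_correct k 0 b (Hk b ltac:(lra)))).
    rewrite plus_comm in C1.
    apply (norm_RInt_le f k a b _ _ Hab); [intros x Hx; apply Hb; lra | exact C1 |].
    replace (RInt k 0 b - RInt k 0 a) with (plus (opp (RInt k 0 a)) (RInt k 0 b))
      by (unfold plus, opp; simpl; ring).
    exact C2. }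
  apply (filterlim_locally_cauchy (F := Rbar_locally p_infty)).
  intros eps.
  assert (Heps2 : 0 < eps / 2) by (destruct eps; simpl; lra).
  destruct (proj1 (filterlim_locally _ K) HK (mkposreal _ Heps2)) as [M HM].
  exists (fun T => Rmax M 0 < T); split; [exists (Rmax M 0); auto |].
  intros u v Hu Hv.
  pose proof (Rmax_l M 0); pose proof (Rmax_r M 0).
  assert (H1 := HM u ltac:(lra)); assert (H2 := HM v ltac:(lra)).
  change (Rabs (RInt k 0 u - K) < eps / 2) in H1.
  change (Rabs (RInt k 0 v - K) < eps / 2) in H2.
  apply Rabs_def2 in H1; apply Rabs_def2 in H2.
  apply (@norm_compat1 R_AbsRing V).
  destruct (Rle_lt_dec u v).
  - eapply Rle_lt_trans; [apply Hinc; lra | lra].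
  - rewrite <- norm_opp, opp_minus.
    eapply Rle_lt_trans; [apply Hinc; lra | lra].
Qed.

End ImproperIntegrals.

Lemma le_lim_of_nondecreasing (K : R -> R) M :
  (forall u v, 0 <= u <= v -> K u <= K v) ->
  filterlim K (Rbar_locally p_infty) (locally M) -> forall T, 0 <= T -> K T <= M.
Proof.
  intros Hm HK T HT.
  apply (filterlim_le (F := Rbar_locally p_infty) (fun _ => K T) K (K T) M).
  - exists T; intros x Hx; apply Hm; lra.
  - apply filterlim_const.
  - exact HK.
Qed.

Lemma RInt_Cmod_le_lim (f : R -> C) M :
  (forall x, continuous f x) ->
  filterlim (fun T => RInt (fun t => Cmod (f t)) 0 T) (Rbar_locally p_infty) (locally M) ->
  forall T, 0 <= T -> RInt (fun t => Cmod (f t)) 0 T <= M.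
Proof.
  intros Hf HM; apply le_lim_of_nondecreasing; [| exact HM].
  intros; apply RInt_nondecreasing_of_nonneg;
    [intros; apply continuous_Cmod, Hf | intros; apply Cmod_ge_0 | assumption].
Qed.

Lemma filterlim_Rmult_p_infty (c : R) : 0 < c ->
  filterlim (fun T => T * c) (Rbar_locally p_infty) (Rbar_locally p_infty).
Proof.
  intros Hc P [M HM]; exists (M / c); intros x Hx; apply HM.
  apply (Rmult_lt_compat_r c) in Hx; [| exact Hc].
  replace (M / c * c) with M in Hx by (field; lra); exact Hx.
Qed.

Lemma filterlim_Cplus {T} {F : (T -> Prop) -> Prop} {FF : Filter F} (f g : T -> C) lf lg :
  filterlim f F (locally lf) -> filterlim g F (locally lg) ->
  filterlim (fun x => (f x + g x)%C) F (locally (lf + lg)%C).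
Proof.
  intros Hf Hg.
  exact (filterlim_comp_2 f g Cplus Hf Hg (@filterlim_plus R_AbsRing C_R_NormedModule lf lg)).
Qed.

Lemma filterlim_Cscal {T} {F : (T -> Prop) -> Prop} {FF : Filter F} (k : C) (f : T -> C) l :
  filterlim f F (locally l) -> filterlim (fun x => (k * f x)%C) F (locally (k * l)%C).
Proof.
  intros Hf; eapply filterlim_comp; [exact Hf |].
  apply (continuous_Cmult (fun _ => k) (fun z => z));
    [apply continuous_const | apply continuous_id].
Qed.

Lemma filterlim_Rplus {T} {F : (T -> Prop) -> Prop} {FF : Filter F} (f g : T -> R) lf lg :
  filterlim f F (locally lf) -> filterlim g F (locally lg) ->
  filterlim (fun x => f x + g x) F (locally (lf + lg)).
Proof.
  intros Hf Hg.
  exact (filterlim_comp_2 f g Rplus Hf Hg (@filterlim_plus R_AbsRing R_NormedModule lf lg)).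
Qed.

(* [laplace_abs_conv f s] unfolds to [abs_integrable (laplace_integrand f s)]. *)
Definition abs_integrable (f : R -> C) : Prop :=
  ex_RInt_gen (fun t => Cmod (f t)) (at_point 0) (Rbar_locally p_infty).

Lemma filter_prod_agree_pos {V : Type} (f g : R -> V) :
  (forall x, 0 < x -> f x = g x) ->
  filter_prod (at_point 0) (Rbar_locally p_infty)
    (fun ab => forall x, Rmin (fst ab) (snd ab) < x < Rmax (fst ab) (snd ab) -> f x = g x).
Proof.
  intros H; apply Filter_prod with (Q := fun x => x = 0) (R := fun y => 0 < y).
  - reflexivity.
  - exists 0; auto.
  - intros x y -> Hy z Hz; simpl in Hz; rewrite Rmin_left in Hz by lra; apply H; lra.
Qed.

Lemma ex_RInt_gen_of_dominated (f k : R -> R) :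
  (forall x, continuous f x) -> (forall x, continuous k x) ->
  (forall t, 0 <= t -> Rabs (f t) <= k t) ->
  ex_RInt_gen k (at_point 0) (Rbar_locally p_infty) ->
  ex_RInt_gen f (at_point 0) (Rbar_locally p_infty).
Proof.
  intros Hf Hk Hb [K HK].
  destruct (ex_filterlim_RInt_dominated (V := R_CompleteNormedModule) f k K
              (fun T _ => ex_RInt_of_continuous f 0 T Hf)
              (fun T _ => ex_RInt_of_continuous k 0 T Hk) Hb
              (filterlim_RInt_of_is_RInt_gen k K HK)) as [l Hl].
  exists l.
  exact (is_RInt_gen_of_filterlim_RInt f l (fun T _ => ex_RInt_of_continuous f 0 T Hf) Hl).
Qed.

Lemma abs_integrable_dominated (f : R -> C) (k : R -> R) :
  (forall x, continuous f x) -> (forall x, continuous k x) ->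
  (forall t, 0 <= t -> Cmod (f t) <= k t) ->
  ex_RInt_gen k (at_point 0) (Rbar_locally p_infty) -> abs_integrable f.
Proof.
  intros Hf Hk Hb; unfold abs_integrable.
  apply (ex_RInt_gen_of_dominated (fun t => Cmod (f t)) k);
    [intros; apply continuous_Cmod, Hf | exact Hk |].
  intros t Ht; rewrite Rabs_right by (apply Rle_ge, Cmod_ge_0); apply Hb, Ht.
Qed.

Lemma abs_integrable_Cplus (f g : R -> C) :
  (forall x, continuous f x) -> (forall x, continuous g x) ->
  abs_integrable f -> abs_integrable g -> abs_integrable (fun t => (f t + g t)%C).
Proof.
  intros Hf Hg [Mf HMf] [Mg HMg].
  apply (abs_integrable_dominated _ (fun t => Cmod (f t) + Cmod (g t))).
  - intros; apply continuous_Cplus; auto.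
  - intros; apply (continuous_plus (V := R_NormedModule)); apply continuous_Cmod; auto.
  - intros; apply Cmod_triangle.
  - exists (plus Mf Mg); exact (is_RInt_gen_plus _ _ _ _ HMf HMg).
Qed.

Lemma abs_integrable_Cscal (k : C) (f : R -> C) :
  (forall x, continuous f x) -> abs_integrable f -> abs_integrable (fun t => (k * f t)%C).
Proof.
  intros Hf [M HM].
  apply (abs_integrable_dominated _ (fun t => scal (Cmod k) (Cmod (f t)))).
  - intros; apply continuous_Cmult; [apply continuous_const | auto].
  - intros; apply (continuous_scal_r (V := R_NormedModule)), continuous_Cmod, Hf.
  - intros; rewrite Cmod_mult; apply Rle_refl.
  - exists (scal (Cmod k) M); exact (is_RInt_gen_scal _ _ _ HM).
Qed.

Lemma abs_integrable_csum (n : nat) (f : nat -> R -> C) :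
  (forall k, (k < n)%nat -> forall x, continuous (f k) x) ->
  (forall k, (k < n)%nat -> abs_integrable (f k)) ->
  abs_integrable (fun t => csum n (fun k => f k t)).
Proof.
  induction n as [| n IH]; simpl; intros Hc Ha.
  - apply (abs_integrable_dominated _ (fun _ => 0)).
    + intros; apply continuous_const.
    + intros; apply continuous_const.
    + intros; rewrite Cmod_0; apply Rle_refl.
    + exists zero; exact (is_RInt_gen_zero (V := R_CompleteNormedModule)).
  - apply abs_integrable_Cplus.
    + intros x; apply (csum_continuous n f x); intros; apply Hc; lia.
    + apply Hc; lia.
    + apply IH; intros; [apply Hc | apply Ha]; lia.
    + apply Ha; lia.
Qed.

Lemma is_RInt_gen_of_abs_integrable (f : R -> C) :
  (forall x, continuous f x) -> abs_integrable f ->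
  is_RInt_gen_C f (at_point 0) (Rbar_locally p_infty)
    (@RInt_gen C_R_CompleteNormedModule f (at_point 0) (Rbar_locally p_infty)).
Proof.
  intros Hf [M HM].
  assert (Hex : forall T, 0 <= T -> ex_RInt_C f 0 T)
    by (intros; apply ex_RInt_C_of_continuous, Hf).
  destruct (ex_filterlim_RInt_dominated (V := C_R_CompleteNormedModule) f (fun t => Cmod (f t)) M
              Hex (fun T _ => ex_RInt_of_continuous _ 0 T (fun x => continuous_Cmod f x (Hf x)))
              (fun t _ => Req_le _ _ (norm_C_R _))
              (filterlim_RInt_of_is_RInt_gen _ M HM)) as [l Hl].
  pose proof (is_RInt_gen_of_filterlim_RInt (V := C_R_CompleteNormedModule) f l Hex Hl) as H.
  rewrite (is_RInt_gen_unique _ _ H); exact H.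
Qed.

Lemma is_RInt_gen_laplace (f : R -> C) s :
  (forall x, continuous f x) -> laplace_abs_conv f s ->
  is_RInt_gen_C (laplace_integrand f s) (at_point 0) (Rbar_locally p_infty) (laplace f s).
Proof.
  intros Hf H; apply is_RInt_gen_of_abs_integrable;
    [apply continuous_laplace_integrand, Hf | exact H].
Qed.

Lemma filterlim_laplace (f : R -> C) s :
  (forall x, continuous f x) -> laplace_abs_conv f s ->
  filterlim (fun T => RInt_C (laplace_integrand f s) 0 T) (Rbar_locally p_infty)
    (locally (laplace f s)).
Proof.
  intros Hf H; apply (filterlim_RInt_of_is_RInt_gen (V := C_R_CompleteNormedModule)).
  apply is_RInt_gen_laplace; assumption.
Qed.

Lemma is_RInt_gen_Cscal (k : C) (f : R -> C) l :
  (forall x, continuous f x) ->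
  is_RInt_gen_C f (at_point 0) (Rbar_locally p_infty) l ->
  is_RInt_gen_C (fun t => (k * f t)%C) (at_point 0) (Rbar_locally p_infty) (k * l)%C.
Proof.
  intros Hf H; apply (is_RInt_gen_of_filterlim_RInt (V := C_R_CompleteNormedModule)).
  - intros; apply ex_RInt_C_of_continuous; intros; apply continuous_Cmult;
      [apply continuous_const | apply Hf].
  - eapply filterlim_ext; [intros T; symmetry; apply RInt_C_scal_of_continuous, Hf |].
    apply filterlim_Cscal, (filterlim_RInt_of_is_RInt_gen (V := C_R_CompleteNormedModule)), H.
Qed.

Lemma is_RInt_gen_csum (n : nat) (f : nat -> R -> C) (l : nat -> C) :
  (forall k, (k < n)%nat -> is_RInt_gen_C (f k) (at_point 0) (Rbar_locally p_infty) (l k)) ->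
  is_RInt_gen_C (fun t => csum n (fun k => f k t)) (at_point 0) (Rbar_locally p_infty) (csum n l).
Proof.
  induction n; simpl; intros H.
  - exact (is_RInt_gen_zero (V := C_R_CompleteNormedModule)).
  - apply (is_RInt_gen_plus (V := C_R_NormedModule));
      [apply IHn; intros; apply H; lia | apply H; lia].
Qed.

Lemma Cmod_RInt_C_tail_le (f : R -> C) l M r :
  (forall x, continuous f x) ->
  filterlim (fun T => RInt_C f 0 T) (Rbar_locally p_infty) (locally l) ->
  filterlim (fun T => RInt (fun t => Cmod (f t)) 0 T) (Rbar_locally p_infty) (locally M) ->
  0 <= r -> Cmod (l - RInt_C f 0 r)%C <= M - RInt (fun t => Cmod (f t)) 0 r.
Proof.
  intros Hf Hl HM Hr.
  set (c := RInt_C f 0 r); set (m := RInt (fun t => Cmod (f t)) 0 r).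
  apply (filterlim_le (F := Rbar_locally p_infty)
           (fun T => Cmod (RInt_C f 0 T - c)%C) (fun T => RInt (fun t => Cmod (f t)) 0 T - m)
           (Cmod (l - c)%C) (M - m)).
  - exists r; intros T HT; apply Cmod_RInt_C_diff_le; [exact Hf | lra].
  - apply (filterlim_comp _ _ _ (fun T => RInt_C f 0 T) (fun z => Cmod (z - c)%C) _ (locally l));
      [exact Hl |].
    apply (continuous_Cmod (fun z => (z - c)%C)), continuous_Cminus;
      [apply continuous_id | apply continuous_const].
  - apply (filterlim_comp _ _ _ (fun T => RInt (fun t => Cmod (f t)) 0 T) (fun x => x - m) _
             (locally M)); [exact HM |].
    apply (continuous_minus (V := R_NormedModule)); [apply continuous_id | apply continuous_const].
Qed.

Lemma abs_integrable_lim_zero (f : R -> C) L :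
  (forall x, continuous f x) -> abs_integrable f ->
  filterlim f (Rbar_locally p_infty) (locally L) -> L = RtoC 0.
Proof.
  intros Hf [M HM] HL.
  destruct (Req_dec (Cmod L) 0) as [H0 | H0]; [apply Cmod_eq_0, H0 |]; exfalso.
  set (k := fun t => Cmod (f t)).
  assert (Hk : forall x, continuous k x) by (intros; apply continuous_Cmod, Hf).
  set (e := Cmod L / 2).
  assert (He : 0 < e) by (pose proof (Cmod_ge_0 L); unfold e; lra).
  assert (Hbig : exists T0, 0 <= T0 /\ forall T, T0 <= T -> e <= k T).
  { assert (HkL : filterlim k (Rbar_locally p_infty) (locally (Cmod L))).
    { apply (filterlim_comp _ _ _ f Cmod _ (locally L)); [exact HL |].
      apply (continuous_Cmod (fun z => z)), continuous_id. }
    destruct (proj1 (filterlim_locally _ _) HkL (mkposreal e He)) as [T1 HT1].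
    exists (Rmax 0 (T1 + 1)); split; [apply Rmax_l |]; intros T HT.
    assert (Hb := HT1 T ltac:(pose proof (Rmax_r 0 (T1 + 1)); lra)).
    change (Rabs (k T - Cmod L) < e) in Hb; apply Rabs_def2 in Hb; unfold e in *; lra. }
  destruct Hbig as [T0 [HT0 Hbig]].
  assert (Hle : forall T, 0 <= T -> RInt k 0 T <= M)
    by exact (RInt_Cmod_le_lim f M Hf (filterlim_RInt_of_is_RInt_gen _ _ HM)).
  assert (HM0 : 0 <= M).
  { transitivity (RInt k 0 0); [rewrite RInt_point; apply Rle_refl | apply Hle, Rle_refl]. }
  (* Beyond T0 the integral of |f| grows at rate at least e, so it exceeds M at T. *)
  set (T := T0 + (M + 1) / e).
  assert (HT : T0 <= T) by (unfold T; pose proof (Rdiv_le_0_compat (M + 1) e ltac:(lra) He); lra).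
  assert (I1 : 0 <= RInt k 0 T0).
  { apply RInt_ge_0; [exact HT0 | apply ex_RInt_of_continuous, Hk | intros; apply Cmod_ge_0]. }
  assert (I2 : RInt (fun _ => e) T0 T <= RInt k T0 T).
  { apply RInt_le; [exact HT | apply ex_RInt_const | apply ex_RInt_of_continuous, Hk |].
    intros x Hx; apply Hbig; lra. }
  rewrite (RInt_const (V := R_CompleteNormedModule)) in I2.
  change (scal (T - T0) e) with ((T - T0) * e) in I2.
  replace ((T - T0) * e) with (M + 1) in I2 by (unfold T; field; lra).
  pose proof (RInt_Chasles_of_continuous k 0 T0 T Hk).
  pose proof (Hle T ltac:(lra)).
  lra.
Qed.

(** * Convolutions *)

Lemma continuous_comp_reflect {V : UniformSpace} (f : R -> V) T x :
  (forall x, continuous f x) -> continuous (fun u => f (T - u)) x.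
Proof.
  intros Hf; apply (continuous_comp (fun u => T - u) f); [| apply Hf].
  apply (ex_derive_continuous (K := R_AbsRing) (V := R_NormedModule)); auto_derive; exact I.
Qed.

Lemma is_derive_RInt_var_bound (f d : R -> R -> R) x :
  (forall y t, continuous (fun t => f y t) t) ->
  (forall y t, is_derive (fun u => f u t) y (d y t)) ->
  (forall y t, continuity_2d_pt d y t) ->
  is_derive (fun y => RInt (fun t => f y t) 0 y) x (RInt (fun t => d x t) 0 x + f x x).
Proof.
  intros Hfc Hfd Hd.
  assert (HD : forall y t, Derive (fun u => f u t) y = d y t)
    by (intros; apply is_derive_unique, Hfd).
  assert (Hex : forall y a b, ex_RInt (fun t => f y t) a b)
    by (intros; apply ex_RInt_of_continuous, Hfc).
  assert (H2d : forall y t, continuity_2d_pt (fun u v => Derive (fun z => f z v) u) y t)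
    by (intros; apply continuity_2d_pt_ext with (f := d); [intros; rewrite HD |]; auto).
  assert (Hloc : forall P : R -> R -> Prop, (forall u v, P u v) -> forall u v, locally_2d P u v)
    by (intros P HP u v; exists (mkposreal 1 Rlt_0_1); intros; apply HP).
  eapply is_derive_ext_eq; [intro; reflexivity | |
    apply (is_derive_RInt_param_bound_comp f (fun _ => 0) (fun x => x) x 0 1)].
  - rewrite (RInt_ext _ (fun t => d x t)) by (intros; apply HD); Rring.
  - apply filter_forall; intros; apply Hex.
  - exists (mkposreal 1 Rlt_0_1); apply filter_forall; intros; apply Hex.
  - exists (mkposreal 1 Rlt_0_1); apply filter_forall; intros; apply Hex.
  - auto_derive; [exact I | ring].
  - auto_derive; [exact I | ring].
  - exists (mkposreal 1 Rlt_0_1); apply filter_forall; intros; eexists; apply Hfd.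
  - intros; apply H2d.
  - apply Hloc; intros; apply H2d.
  - apply Hloc; intros; apply H2d.
  - apply continuity_pt_filterlim, Hfc.
  - apply continuity_pt_filterlim, Hfc.
Qed.

Lemma is_derive_RInt_convolution_R (p q : R -> R) x :
  (forall x, continuous p x) -> (forall x, continuous q x) ->
  is_derive (fun T => RInt (fun u => p u * RInt q 0 (T - u)) 0 T) x
            (RInt (fun u => p u * q (x - u)) 0 x).
Proof.
  intros Hp Hq.
  assert (HQd : forall r, is_derive (fun r => RInt q 0 r) r (q r)).
  { intros r; apply (is_derive_RInt q _ 0 r); [| apply Hq].
    apply filter_forall; intros; apply is_RInt_of_continuous, Hq. }
  eapply is_derive_ext_eq; [intro; reflexivity | |
    apply (is_derive_RInt_var_bound (fun y t => p t * RInt q 0 (y - t))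
                                    (fun y t => p t * q (y - t)))].
  - rewrite Rminus_diag, RInt_point; unfold zero; simpl; Rring.
  - intros y t; apply (continuous_mult (K := R_AbsRing)); [apply Hp |].
    apply (continuous_comp_reflect (fun r => RInt q 0 r) y t); intros r.
    apply (ex_derive_continuous (K := R_AbsRing) (V := R_NormedModule)); eexists; apply HQd.
  - intros y t; replace (p t * q (y - t)) with (p t * (1 * q (y - t))) by ring.
    apply is_derive_scal, (is_derive_comp (fun r => RInt q 0 r) (fun u => u - t)); [apply HQd |].
    auto_derive; [exact I | ring].
  - intros y t; apply continuity_2d_pt_mult.
    + apply (continuity_1d_2d_pt_comp p (fun _ v => v));
        [apply continuity_pt_filterlim, Hp | apply continuity_2d_pt_id2].
    + apply (continuity_1d_2d_pt_comp q (fun u v => u - v)); [apply continuity_pt_filterlim, Hq |].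
      apply continuity_2d_pt_minus; [apply continuity_2d_pt_id1 | apply continuity_2d_pt_id2].
Qed.

Lemma RInt_C_components (f : R -> C) a b :
  (forall x, continuous f x) ->
  RInt_C f a b = (RInt (fun t => fst (f t)) a b, RInt (fun t => snd (f t)) a b).
Proof.
  intros Hf; apply is_RInt_unique, is_RInt_C_pair; simpl;
    apply is_RInt_of_continuous; intros; [apply continuous_Cfst | apply continuous_Csnd]; apply Hf.
Qed.

Lemma RInt_C_convolution_components (a b : R -> C) (T : R) :
  (forall x, continuous a x) -> (forall x, continuous b x) ->
  RInt_C (fun u => a u * b (T - u)%R)%C 0 T =
  (RInt (fun u => fst (a u) * fst (b (T - u))) 0 T
     - RInt (fun u => snd (a u) * snd (b (T - u))) 0 T,
   RInt (fun u => fst (a u) * snd (b (T - u))) 0 T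
     + RInt (fun u => snd (a u) * fst (b (T - u))) 0 T).
Proof.
  intros Ha Hb.
  assert (Hcomp : forall (p q : R -> R), (forall x, continuous p x) -> (forall x, continuous q x) ->
            is_RInt (fun u => p u * q (T - u)) 0 T (RInt (fun u => p u * q (T - u)) 0 T)).
  { intros p q Hp Hq; apply is_RInt_of_continuous; intros x.
    apply (continuous_mult (K := R_AbsRing)); [apply Hp | apply continuous_comp_reflect, Hq]. }
  assert (Ha1 := fun x => continuous_Cfst a x (Ha x)).
  assert (Ha2 := fun x => continuous_Csnd a x (Ha x)).
  assert (Hb1 := fun x => continuous_Cfst b x (Hb x)).
  assert (Hb2 := fun x => continuous_Csnd b x (Hb x)).
  apply is_RInt_unique, is_RInt_C_pair; simpl.
  - eapply is_RInt_ext;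
      [| exact (is_RInt_minus _ _ _ _ _ _ (Hcomp _ _ Ha1 Hb1) (Hcomp _ _ Ha2 Hb2))].
    reflexivity.
  - eapply is_RInt_ext;
      [| exact (is_RInt_plus _ _ _ _ _ _ (Hcomp _ _ Ha1 Hb2) (Hcomp _ _ Ha2 Hb1))].
    reflexivity.
Qed.

Lemma is_derive_RInt_convolution (a b : R -> C) x :
  (forall x, continuous a x) -> (forall x, continuous b x) ->
  is_derive_C (fun T => RInt_C (fun u => a u * RInt_C b 0 (T - u)%R)%C 0 T) x
              (RInt_C (fun u => a u * b (x - u)%R)%C 0 x).
Proof.
  intros Ha Hb.
  assert (Ha1 := fun x => continuous_Cfst a x (Ha x)).
  assert (Ha2 := fun x => continuous_Csnd a x (Ha x)).
  assert (Hb1 := fun x => continuous_Cfst b x (Hb x)).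
  assert (Hb2 := fun x => continuous_Csnd b x (Hb x)).
  assert (HB : forall r,
            RInt_C b 0 r = (RInt (fun t => fst (b t)) 0 r, RInt (fun t => snd (b t)) 0 r))
    by (intros; apply RInt_C_components, Hb).
  set (a1 := fun t => fst (a t)); set (a2 := fun t => snd (a t)).
  set (B1 := fun r => RInt (fun t => fst (b t)) 0 r).
  set (B2 := fun r => RInt (fun t => snd (b t)) 0 r).
  eapply (is_derive_ext_eq (K := R_AbsRing) (V := C_R_NormedModule)
           (fun T => (RInt (fun u => a1 u * B1 (T - u)) 0 T
                        - RInt (fun u => a2 u * B2 (T - u)) 0 T,
                      RInt (fun u => a1 u * B2 (T - u)) 0 T
                        + RInt (fun u => a2 u * B1 (T - u)) 0 T))
           _ x _ (RInt_C (fun u => a u * b (x - u)%R)%C 0 x)).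
  - intros T.
    rewrite (RInt_C_convolution_components a (fun r => RInt_C b 0 r) T Ha
               (fun r => continuous_RInt_C_of_continuous b 0 r Hb)).
    f_equal; f_equal; apply RInt_ext; intros; rewrite HB; reflexivity.
  - symmetry; apply RInt_C_convolution_components; assumption.
  - apply is_derive_C_pair; simpl.
    + exact (is_derive_minus _ _ _ _ _ (is_derive_RInt_convolution_R _ _ x Ha1 Hb1)
                                         (is_derive_RInt_convolution_R _ _ x Ha2 Hb2)).
    + exact (is_derive_plus _ _ _ _ _ (is_derive_RInt_convolution_R _ _ x Ha1 Hb2)
                                        (is_derive_RInt_convolution_R _ _ x Ha2 Hb1)).
Qed.

Lemma filterlim_tail_half (N : R -> R) M c :
  filterlim N (Rbar_locally p_infty) (locally M) ->
  filterlim (fun T => c * (M - N (T / 2))) (Rbar_locally p_infty) (locally 0).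
Proof.
  intros HN; replace 0 with (c * (M - M)) by ring.
  apply (filterlim_comp _ _ _ (fun T => N (T / 2)) (fun x => c * (M - x)) _ (locally M)).
  - exact (filterlim_comp _ _ _ (fun T => T / 2) N _ _ _
             (filterlim_Rmult_p_infty (/ 2) ltac:(lra)) HN).
  - apply (continuous_mult (K := R_AbsRing) (fun _ => c) (fun x => M - x));
      [apply continuous_const |].
    apply (continuous_minus (V := R_NormedModule) (fun _ => M) (fun x => x));
      [apply continuous_const | apply continuous_id].
Qed.

Section ConvolutionLimit.
Variables (a b : R -> C) (lb : C) (Ma Mb : R).
Hypothesis (Ha : forall x, continuous a x) (Hb : forall x, continuous b x).
Hypothesis Hlb : filterlim (fun T => RInt_C b 0 T) (Rbar_locally p_infty) (locally lb).
Hypothesis HMa :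
  filterlim (fun T => RInt (fun t => Cmod (a t)) 0 T) (Rbar_locally p_infty) (locally Ma).
Hypothesis HMb :
  filterlim (fun T => RInt (fun t => Cmod (b t)) 0 T) (Rbar_locally p_infty) (locally Mb).

(* Split at T/2: on [0, T/2] the tail of b beyond T/2 is small, on [T/2, T] that of |a| is. *)
Lemma Cmod_convolution_defect_le (T : R) : 0 <= T ->
  Cmod (RInt_C (fun u => a u * (RInt_C b 0 (T - u)%R - lb))%C 0 T)
    <= Ma * (Mb - RInt (fun t => Cmod (b t)) 0 (T / 2))
       + Mb * (Ma - RInt (fun t => Cmod (a t)) 0 (T / 2)).
Proof.
  intros HT.
  set (Na := fun T => RInt (fun t => Cmod (a t)) 0 T).
  set (Nb := fun T => RInt (fun t => Cmod (b t)) 0 T).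
  assert (NaM : forall T, 0 <= T -> Na T <= Ma) by (apply RInt_Cmod_le_lim; assumption).
  assert (NbM : forall T, 0 <= T -> Nb T <= Mb) by (apply RInt_Cmod_le_lim; assumption).
  assert (Nb0 : forall T, 0 <= T -> 0 <= Nb T).
  { intros; apply RInt_ge_0; [lra | apply ex_RInt_of_continuous | intros; apply Cmod_ge_0].
    intros; apply continuous_Cmod, Hb. }
  assert (Nbm : forall u v, 0 <= u <= v -> Nb u <= Nb v).
  { intros; apply RInt_nondecreasing_of_nonneg; [intros; apply continuous_Cmod, Hb | | assumption].
    intros; apply Cmod_ge_0. }
  assert (Htail : forall r, 0 <= r -> Cmod (RInt_C b 0 r - lb)%C <= Mb - Nb r).
  { intros r Hr; rewrite <- Cmod_opp.
    replace (- (RInt_C b 0 r - lb))%C with (lb - RInt_C b 0 r)%C by Cring.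
    apply Cmod_RInt_C_tail_le; assumption. }
  set (B := fun u => (RInt_C b 0 (T - u)%R - lb)%C).
  assert (CB : forall x, continuous B x).
  { intros x; apply continuous_Cminus; [| apply continuous_const].
    apply (continuous_comp_reflect (fun r => RInt_C b 0 r)).
    intros; apply continuous_RInt_C_of_continuous, Hb. }
  assert (B1 : Cmod (RInt_C (fun u => a u * B u)%C 0 (T / 2)) <= Na (T / 2) * (Mb - Nb (T / 2))).
  { apply Cmod_RInt_C_mult_le; [lra | exact Ha | exact CB |].
    intros u Hu; eapply Rle_trans; [exact (Htail (T - u) ltac:(lra)) |].
    assert (Nb (T / 2) <= Nb (T - u)) by (apply Nbm; lra); lra. }
  assert (B2 : Cmod (RInt_C (fun u => a u * B u)%C (T / 2) T)
               <= RInt (fun t => Cmod (a t)) (T / 2) T * Mb).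
  { apply Cmod_RInt_C_mult_le; [lra | exact Ha | exact CB |].
    intros u Hu; eapply Rle_trans; [exact (Htail (T - u) ltac:(lra)) |].
    assert (0 <= Nb (T - u)) by (apply Nb0; lra); lra. }
  assert (Hsplit : Na (T / 2) + RInt (fun t => Cmod (a t)) (T / 2) T = Na T)
    by (apply RInt_Chasles_of_continuous; intros; apply continuous_Cmod, Ha).
  change (Cmod (RInt_C (fun u => a u * B u)%C 0 T)
          <= Ma * (Mb - Nb (T / 2)) + Mb * (Ma - Na (T / 2))).
  rewrite <- (RInt_C_Chasles_of_continuous (fun u => a u * B u)%C 0 (T / 2) T)
    by (intros; apply continuous_Cmult; [apply Ha | apply CB]).
  eapply Rle_trans; [apply Cmod_triangle |].
  assert (Na (T / 2) * (Mb - Nb (T / 2)) <= Ma * (Mb - Nb (T / 2))).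
  { apply Rmult_le_compat_r; [pose proof (NbM (T / 2)); lra | apply NaM; lra]. }
  assert (RInt (fun t => Cmod (a t)) (T / 2) T * Mb <= Mb * (Ma - Na (T / 2))).
  { rewrite Rmult_comm; apply Rmult_le_compat_l; [pose proof (NbM 0); pose proof (Nb0 0); lra |].
    pose proof (NaM T HT); lra. }
  unfold Na, Nb in *; lra.
Qed.

Lemma filterlim_convolution_defect :
  filterlim (fun T => RInt_C (fun u => a u * (RInt_C b 0 (T - u)%R - lb))%C 0 T)
    (Rbar_locally p_infty) (locally (RtoC 0)).
Proof.
  set (D := fun T => RInt_C (fun u => a u * (RInt_C b 0 (T - u)%R - lb))%C 0 T).
  apply (filterlim_norm_zero (K := R_AbsRing) (V := C_R_NormedModule)).
  apply (filterlim_ext (fun T => Cmod (D T))); [intros T; symmetry; exact (norm_C_R (D T)) |].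
  change (filterlim (fun T => Cmod (D T)) (Rbar_locally p_infty) (Rbar_locally (Finite 0))).
  apply (filterlim_le_le (F := Rbar_locally p_infty) (fun _ => 0) (fun T => Cmod (D T))
           (fun T => Ma * (Mb - RInt (fun t => Cmod (b t)) 0 (T / 2))
                     + Mb * (Ma - RInt (fun t => Cmod (a t)) 0 (T / 2))) (Finite 0)).
  - exists 0; intros T HT; split; [apply Cmod_ge_0 |].
    unfold D; apply (Cmod_convolution_defect_le T); lra.
  - apply filterlim_const.
  - pose proof (filterlim_Rplus _ _ _ _ (filterlim_tail_half _ _ Ma HMb)
                  (filterlim_tail_half _ _ Mb HMa)) as H.
    rewrite Rplus_0_r in H; exact H.
Qed.

Lemma filterlim_RInt_convolution (la : C) :
  filterlim (fun T => RInt_C a 0 T) (Rbar_locally p_infty) (locally la) ->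
  filterlim (fun T => RInt_C (fun u => a u * RInt_C b 0 (T - u)%R)%C 0 T) (Rbar_locally p_infty)
    (locally (lb * la)%C).
Proof.
  intros Hla; replace (lb * la)%C with (RtoC 0 + lb * la)%C by Cring.
  eapply filterlim_ext;
    [| exact (filterlim_Cplus _ _ _ _ filterlim_convolution_defect (filterlim_Cscal lb _ _ Hla))].
  intros T.
  assert (HaB : forall x, continuous (fun u : R => a u * RInt_C b 0 (T - u)%R)%C x).
  { intros; apply continuous_Cmult; [apply Ha |].
    apply (continuous_comp_reflect (fun r => RInt_C b 0 r)).
    intros; apply continuous_RInt_C_of_continuous, Hb. }
  assert (Hla' : forall x, continuous (fun u : R => lb * a u)%C x)
    by (intros; apply continuous_Cmult; [apply continuous_const | apply Ha]).
  cbv beta; rewrite (RInt_ext (V := C_R_CompleteNormedModule)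
                       (fun u => a u * (RInt_C b 0 (T - u)%R - lb))%C
                       (fun u => a u * RInt_C b 0 (T - u)%R - lb * a u)%C) by (intros; Cring).
  rewrite (RInt_C_minus_of_continuous _ _ 0 T HaB Hla'), (RInt_C_scal_of_continuous lb a 0 T Ha).
  Cring.
Qed.

End ConvolutionLimit.

Lemma RInt_C_laplace_convolution (y g : R -> C) s T :
  (forall x, continuous y x) -> (forall x, continuous g x) ->
  RInt_C (fun u => laplace_integrand y s u * laplace_integrand g s (T - u)%R)%C 0 T
  = (laplace_kernel s T * RInt_C (fun u => g (T - u)%R * y u) 0 T)%C.
Proof.
  intros Hy Hg; rewrite <- RInt_C_scal_of_continuous
    by (intros; apply continuous_Cmult; [apply continuous_comp_reflect, Hg | apply Hy]).
  apply RInt_ext; intros u _.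
  replace (laplace_kernel s T) with (laplace_kernel s u * laplace_kernel s (T - u))%C
    by (rewrite laplace_kernel_plus; f_equal; ring).
  unfold laplace_integrand; fold (laplace_kernel s u) (laplace_kernel s (T - u)); Cring.
Qed.

(** * The scalar Volterra equation *)

Section VolterraLaplace.
Variables (y g : R -> C) (c : R) (s : C).
Hypothesis (Hy : forall x, continuous y x) (Hg : forall x, continuous g x).
Hypothesis Hd : forall t, 0 < t ->
  is_derive_C y t (RtoC (- c) * RInt_C (fun u => g (t - u)%R * y u) 0 t)%C.

Lemma laplace_integrand_volterra (T : R) : 0 <= T ->
  laplace_integrand y s T =
  (y 0 - s * RInt_C (laplace_integrand y s) 0 T
   - c * RInt_C (fun u => laplace_integrand y s u
                          * RInt_C (laplace_integrand g s) 0 (T - u)%R) 0 T)%C.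
Proof.
  intros HT.
  set (a := laplace_integrand y s); set (b := laplace_integrand g s).
  assert (Ca : forall x, continuous a x) by (apply continuous_laplace_integrand, Hy).
  assert (Cb : forall x, continuous b x) by (apply continuous_laplace_integrand, Hg).
  pose (A := fun T => RInt_C (fun u => a u * RInt_C b 0 (T - u)%R)%C 0 T).
  pose (Phi := fun T => (a T + s * RInt_C a 0 T + c * A T)%C).
  assert (HA : forall T, is_derive_C A T (RInt_C (fun u => a u * b (T - u)%R)%C 0 T))
    by (intros T0; exact (is_derive_RInt_convolution a b T0 Ca Cb)).
  assert (HPhi' : forall T, 0 < T -> is_derive_C Phi T (RtoC 0)).
  { intros T' HT'.
    assert (Ha' := is_derive_Cmult _ _ _ _ _ (is_derive_laplace_kernel s T') (Hd T' HT')).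
    eapply is_derive_ext_eq; [intro; reflexivity | |
      exact (is_derive_Cplus _ _ _ _ _
               (is_derive_Cplus _ _ _ _ _ Ha'
                  (is_derive_Cscal s _ _ _ (is_derive_RInt_C_of_continuous a T' Ca)))
               (is_derive_Cscal c _ _ _ (HA T')))].
    unfold a, b; rewrite RInt_C_laplace_convolution by assumption.
    unfold laplace_integrand; fold (laplace_kernel s T'); rewrite RtoC_opp; Cring. }
  assert (HPhi : forall x, continuous Phi x).
  { intros x; apply continuous_Cplus; [apply continuous_Cplus |].
    - apply Ca.
    - apply continuous_Cmult; [apply continuous_const | apply continuous_RInt_C_of_continuous, Ca].
    - apply continuous_Cmult; [apply continuous_const |].
      apply (ex_derive_continuous (K := R_AbsRing) (V := C_R_NormedModule)); eexists; apply HA. }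
  assert (HPhi0 : Phi 0 = y 0).
  { unfold Phi, A; rewrite !(RInt_point (V := C_R_CompleteNormedModule)).
    unfold a, laplace_integrand; fold (laplace_kernel s 0); rewrite laplace_kernel_0.
    change (@zero C_R_CompleteNormedModule) with (RtoC 0); Cring. }
  rewrite <- HPhi0, <- (is_derive_C_zero_const Phi HPhi HPhi' T HT).
  unfold Phi, A; Cring.
Qed.

Lemma laplace_volterra :
  laplace_abs_conv y s -> laplace_abs_conv g s ->
  (s * laplace y s + c * (laplace g s * laplace y s))%C = y 0.
Proof.
  intros Hay Hag.
  set (a := laplace_integrand y s); set (b := laplace_integrand g s).
  assert (Ca : forall x, continuous a x) by (apply continuous_laplace_integrand, Hy).
  assert (Cb : forall x, continuous b x) by (apply continuous_laplace_integrand, Hg).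
  set (ly := laplace y s); set (lg := laplace g s).
  destruct Hay as [Ma HMa]; destruct Hag as [Mb HMb].
  assert (Hly := filterlim_laplace y s Hy (ex_intro _ Ma HMa)).
  assert (Hconv := filterlim_RInt_convolution a b lg Ma Mb Ca Cb
                     (filterlim_laplace g s Hg (ex_intro _ Mb HMb))
                     (filterlim_RInt_of_is_RInt_gen _ _ HMa) (filterlim_RInt_of_is_RInt_gen _ _ HMb)
                     ly Hly).
  assert (Hlim : filterlim a (Rbar_locally p_infty)
                   (locally (y 0 + (- s * ly + - c * (lg * ly)))%C)).
  { apply (filterlim_ext_loc (fun T => y 0 + (- s * RInt_C a 0 T
                                + - c * RInt_C (fun u => a u * RInt_C b 0 (T - u)%R)%C 0 T))%C).
    - exists 0; intros T HT; symmetry.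
      unfold a, b; rewrite (laplace_integrand_volterra T ltac:(lra)); Cring.
    - apply filterlim_Cplus; [apply filterlim_const |].
      apply filterlim_Cplus; apply filterlim_Cscal;
        [exact Hly | exact Hconv]. }
  pose proof (abs_integrable_lim_zero a _ Ca (ex_intro _ Ma HMa) Hlim) as H0.
  transitivity (s * ly + c * (lg * ly) + (y 0 + (- s * ly + - c * (lg * ly))))%C;
    [rewrite H0 | ]; Cring.
Qed.

End VolterraLaplace.

(** * Transformations of Laplace transforms *)

Lemma continuous_clamp (f : R -> C) :
  continuous_on_nonneg f -> forall x, continuous (fun t => f (Rmax 0 t)) x.
Proof.
  intros Hf x P HP.
  destruct (Hf (Rmax 0 x) (Rmax_l _ _) P HP) as [eps He].
  exists eps; intros t Ht; apply He; [| apply Rmax_l].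
  change (Rabs (Rmax 0 t - Rmax 0 x) < eps); change (Rabs (t - x) < eps) in Ht.
  unfold Rmax in *; destruct (Rle_dec 0 t), (Rle_dec 0 x); unfold Rabs in *;
    repeat destruct Rcase_abs; lra.
Qed.

Lemma laplace_ext_pos (f g : R -> C) s s' :
  (forall x, continuous g x) ->
  (forall t, 0 < t -> laplace_integrand f s t = laplace_integrand g s' t) ->
  laplace_abs_conv f s -> laplace_abs_conv g s' /\ laplace f s = laplace g s'.
Proof.
  intros Hg Heq Ha.
  assert (Hag : laplace_abs_conv g s').
  { unfold laplace_abs_conv.
    apply (ex_RInt_gen_ext (fun t => Cmod (laplace_integrand f s t))); [| exact Ha].
    apply (filter_prod_agree_pos (fun t => Cmod (laplace_integrand f s t))
                                 (fun t => Cmod (laplace_integrand g s' t))).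
    intros t Ht; rewrite Heq by exact Ht; reflexivity. }
  split; [exact Hag |].
  unfold laplace at 1.
  apply (is_RInt_gen_unique (V := C_R_CompleteNormedModule)).
  apply (is_RInt_gen_ext (V := C_R_NormedModule) (laplace_integrand g s'));
    [| exact (is_RInt_gen_laplace g s' Hg Hag)].
  apply filter_prod_agree_pos; intros t Ht; symmetry; apply Heq, Ht.
Qed.

Lemma laplace_lincomb (n : nat) (u : nat -> C) (f : nat -> R -> C) s :
  (forall k, (k < n)%nat -> forall x, continuous (f k) x) ->
  (forall k, (k < n)%nat -> laplace_abs_conv (f k) s) ->
  laplace_abs_conv (fun t => csum n (fun k => u k * f k t)%C) s /\
  laplace (fun t => csum n (fun k => u k * f k t)%C) s = csum n (fun k => u k * laplace (f k) s)%C.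
Proof.
  intros Hc Ha.
  assert (Hli : forall t, laplace_integrand (fun t => csum n (fun k => u k * f k t)%C) s t
                          = csum n (fun k => u k * laplace_integrand (f k) s t)%C).
  { intros t; unfold laplace_integrand; rewrite <- csum_scal_l; apply csum_ext; intros; Cring. }
  split.
  - unfold laplace_abs_conv.
    apply (ex_RInt_gen_ext_eq (V := R_NormedModule)
             (fun t => Cmod (csum n (fun k => u k * laplace_integrand (f k) s t)%C))
             (fun t => Cmod (laplace_integrand (fun t => csum n (fun k => u k * f k t)%C) s t)));
      [intros t; rewrite Hli; reflexivity |].
    assert (Hc' : forall k, (k < n)%nat ->
              forall x, continuous (fun t => u k * laplace_integrand (f k) s t)%C x).
    { intros k Hk x; apply continuous_Cmult;
        [apply continuous_const | apply continuous_laplace_integrand, Hc, Hk]. }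
    assert (Ha' : forall k, (k < n)%nat ->
              abs_integrable (fun t => u k * laplace_integrand (f k) s t)%C).
    { intros k Hk; apply abs_integrable_Cscal;
        [apply continuous_laplace_integrand, Hc, Hk | exact (Ha k Hk)]. }
    exact (abs_integrable_csum n _ Hc' Ha').
  - unfold laplace at 1.
    apply (is_RInt_gen_unique (V := C_R_CompleteNormedModule)).
    apply (is_RInt_gen_ext (V := C_R_NormedModule)
             (fun t => csum n (fun k => u k * laplace_integrand (f k) s t)%C));
      [apply filter_forall; intros; symmetry; apply Hli |].
    apply is_RInt_gen_csum; intros k Hk.
    apply is_RInt_gen_Cscal; [apply continuous_laplace_integrand, Hc, Hk |].
    exact (is_RInt_gen_laplace (f k) s (Hc k Hk) (Ha k Hk)).
Qed.

Lemma is_RInt_gen_comp_scal {V : CompleteNormedModule R_AbsRing} (h : R -> V) (c : R) (l : V) :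
  0 < c -> (forall x, continuous h x) ->
  is_RInt_gen (fun t => h (t / c)) (at_point 0) (Rbar_locally p_infty) l ->
  is_RInt_gen h (at_point 0) (Rbar_locally p_infty) (scal (/ c) l).
Proof.
  intros Hc Hh H.
  assert (Hex : forall a b, ex_RInt h a b) by (intros; apply ex_RInt_continuous; intros; apply Hh).
  assert (Hhc : forall x, continuous (fun t => h (t / c)) x).
  { intros x; apply (continuous_comp (fun t => t / c) h); [| apply Hh].
    apply (ex_derive_continuous (K := R_AbsRing) (V := R_NormedModule)); auto_derive; auto. }
  assert (Key : forall T, RInt h 0 T = scal (/ c) (RInt (fun t => h (t / c)) 0 (T * c))).
  { intros T; apply is_RInt_unique.
    assert (K := is_RInt_comp_lin (fun t => h (t / c)) c 0 0 T _
                   (RInt_correct _ _ _ (ex_RInt_continuous _ _ _ (fun z _ => Hhc z)))).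
    apply is_RInt_scal with (k := / c) in K.
    replace (c * 0 + 0) with 0 in K by ring; replace (c * T + 0) with (T * c) in K by ring.
    eapply is_RInt_ext; [| exact K]; intros y _.
    cbv beta; rewrite scal_assoc; replace ((c * y + 0) / c) with y by (field; lra).
    replace (mult (/ c) c) with (@one R_Ring) by (unfold mult, one; simpl; field; lra).
    apply scal_one. }
  apply is_RInt_gen_of_filterlim_RInt; [intros; apply Hex |].
  eapply filterlim_ext; [intros T; symmetry; apply Key |].
  apply (filterlim_comp _ _ _ (fun T => RInt (fun t => h (t / c)) 0 (T * c)) (scal (/ c)) _
           (locally l));
    [| exact (filterlim_scal_r (V := V) (/ c) l)].
  exact (filterlim_comp _ _ _ (fun T => T * c) (fun S => RInt (fun t => h (t / c)) 0 S) _ _ _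
           (filterlim_Rmult_p_infty c Hc) (filterlim_RInt_of_is_RInt_gen _ _ H)).
Qed.

Lemma laplace_comp_scal (f : R -> C) (c : R) p :
  0 < c -> (forall x, continuous f x) -> laplace_abs_conv (fun t => f (t / c)) p ->
  laplace_abs_conv f (c * p)%C /\ laplace (fun t => f (t / c)) p = (c * laplace f (c * p)%C)%C.
Proof.
  intros Hc Hf Ha.
  set (h := laplace_integrand f (c * p)%C).
  assert (Hh : forall x, continuous h x) by (apply continuous_laplace_integrand, Hf).
  assert (Hscal : forall t, laplace_integrand (fun t => f (t / c)) p t = h (t / c)).
  { intros t; unfold h, laplace_integrand; do 3 f_equal.
    destruct p; unfold Cmult, RtoC; simpl; f_equal; field; lra. }
  assert (Habs : abs_integrable h).
  { destruct Ha as [M HM]; exists (scal (/ c) M).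
    apply (is_RInt_gen_comp_scal (V := R_CompleteNormedModule) (fun t => Cmod (h t)) c M Hc);
      [intros; apply continuous_Cmod, Hh |].
    eapply (is_RInt_gen_ext (V := R_NormedModule)); [| exact HM].
    apply filter_forall; intros; rewrite Hscal; reflexivity. }
  split; [exact Habs |].
  assert (Hfc : forall x, continuous (fun t => f (t / c)) x).
  { intros x; apply (continuous_comp (fun t => t / c) f); [| apply Hf].
    apply (ex_derive_continuous (K := R_AbsRing) (V := R_NormedModule)); auto_derive; auto. }
  assert (HL : is_RInt_gen_C (fun t => h (t / c)) (at_point 0) (Rbar_locally p_infty)
                 (laplace (fun t => f (t / c)) p)).
  { apply (is_RInt_gen_ext (V := C_R_NormedModule) (laplace_integrand (fun t => f (t / c)) p));
      [apply filter_forall; intros; apply Hscal |].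
    exact (is_RInt_gen_laplace _ p Hfc Ha). }
  assert (E : laplace f (c * p)%C = scal (/ c) (laplace (fun t => f (t / c)) p)).
  { unfold laplace at 1; fold h.
    apply (is_RInt_gen_unique (V := C_R_CompleteNormedModule) h).
    exact (is_RInt_gen_comp_scal (V := C_R_CompleteNormedModule) h c _ Hc Hh HL). }
  rewrite E, scal_C_R, Cmult_assoc, <- RtoC_mult, Rinv_r, Cmult_1_l by lra.
  reflexivity.
Qed.

(** * Matrices and eigencomponents *)

Lemma mmul_assoc N (A B D : Mat) i j :
  mmul N (mmul N A B) D i j = mmul N A (mmul N B D) i j.
Proof.
  unfold mmul.
  transitivity (csum N (fun k => csum N (fun l => A i l * B l k * D k j)%C)).
  { apply csum_ext; intros; rewrite <- csum_scal_r; reflexivity. }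
  rewrite csum_swap; apply csum_ext; intros; rewrite <- csum_scal_l.
  apply csum_ext; intros; Cring.
Qed.

Lemma mmul_meq_l N (A A' B : Mat) i j :
  meq N A A' -> (i < N)%nat -> mmul N A B i j = mmul N A' B i j.
Proof. intros H Hi; apply csum_ext; intros k Hk; rewrite H by assumption; reflexivity. Qed.

Lemma mmul_meq_r N (A B B' : Mat) i j :
  meq N B B' -> (j < N)%nat -> mmul N A B i j = mmul N A B' i j.
Proof. intros H Hj; apply csum_ext; intros k Hk; rewrite H by assumption; reflexivity. Qed.

Lemma mmul_mdiag_l N (d : nat -> C) (B : Mat) i j :
  (i < N)%nat -> mmul N (mdiag d) B i j = (d i * B i j)%C.
Proof.
  intros Hi; unfold mmul, mdiag.
  rewrite <- (csum_delta N i (fun k => d k * B k j)%C Hi).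
  apply csum_ext; intros k _.
  destruct (Nat.eqb i k) eqn:Hik; [apply Nat.eqb_eq in Hik; subst |]; Cring.
Qed.

Lemma mmul_mdiag_r N (A : Mat) (d : nat -> C) i j :
  (j < N)%nat -> mmul N A (mdiag d) i j = (A i j * d j)%C.
Proof.
  intros Hj; unfold mmul, mdiag.
  rewrite <- (csum_delta_r N j (fun k => A i k * d k)%C Hj).
  apply csum_ext; intros k _.
  destruct (Nat.eqb k j) eqn:Hkj; [apply Nat.eqb_eq in Hkj; subst |]; Cring.
Qed.

Lemma mmul_mid_l N (B : Mat) i j : (i < N)%nat -> mmul N mid B i j = B i j.
Proof. intros Hi; exact (eq_trans (mmul_mdiag_l N (fun _ => RtoC 1) B i j Hi) (Cmult_1_l _)). Qed.

Lemma mmul_mid_r N (A : Mat) i j : (j < N)%nat -> mmul N A mid i j = A i j.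
Proof. intros Hj; exact (eq_trans (mmul_mdiag_r N A (fun _ => RtoC 1) i j Hj) (Cmult_1_r _)). Qed.

Lemma mfun_entry N U E (f : R -> C) i m :
  mfun N U E f i m = csum N (fun n => U i n * f (E n) * Cconj (U m n))%C.
Proof.
  apply csum_ext; intros n Hn; rewrite mmul_mdiag_r by exact Hn; reflexivity.
Qed.

Lemma mmul_mmul_madj N (U W : Mat) i j :
  meq N (mmul N U (madj U)) mid -> (i < N)%nat -> mmul N U (mmul N (madj U) W) i j = W i j.
Proof.
  intros HU Hi; rewrite <- mmul_assoc, (mmul_meq_l N _ mid) by assumption.
  apply mmul_mid_l, Hi.
Qed.

Lemma madj_mmul_mfun N U E (f : R -> C) (W : Mat) a j :
  meq N (mmul N (madj U) U) mid -> (a < N)%nat ->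
  mmul N (madj U) (mmul N (mfun N U E f) W) a j = (f (E a) * mmul N (madj U) W a j)%C.
Proof.
  intros HU Ha; set (D := mdiag (fun b => f (E b))).
  assert (HUD : meq N (mmul N (madj U) (mmul N U D)) D).
  { intros k l Hk Hl; rewrite <- mmul_assoc, (mmul_meq_l N _ mid) by assumption.
    apply mmul_mid_l, Hk. }
  assert (HUf : meq N (mmul N (madj U) (mfun N U E f)) (mmul N D (madj U))).
  { intros k l Hk Hl; unfold mfun; fold D.
    rewrite <- mmul_assoc; apply mmul_meq_l; assumption. }
  rewrite <- mmul_assoc, (mmul_meq_l N _ _ _ _ _ HUf Ha), mmul_assoc.
  apply mmul_mdiag_l, Ha.
Qed.

Lemma unitary_column_nonzero N (U : Mat) a :
  meq N (mmul N (madj U) U) mid -> (a < N)%nat -> ~ (forall l, (l < N)%nat -> U l a = RtoC 0).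
Proof.
  intros HU Ha Hz.
  pose proof (HU a a Ha Ha) as E1; unfold mmul, madj, mid in E1; rewrite Nat.eqb_refl in E1.
  rewrite (csum_ext _ _ (fun _ => RtoC 0)), csum_zero in E1.
  - injection E1; lra.
  - intros k Hk; rewrite Hz by exact Hk; Cring.
Qed.

Lemma laplace_rescale (f : R -> C) (c : R) p :
  0 < c -> continuous_on_nonneg f -> laplace_abs_conv (fun t => f (t / c)) p ->
  laplace_abs_conv (fun t => f (Rmax 0 t)) (c * p)%C /\
  laplace (fun t => f (t / c)) p = (c * laplace (fun t => f (Rmax 0 t)) (c * p)%C)%C.
Proof.
  intros Hc Hf Ha.
  assert (Hfc : forall x, continuous (fun t => f (Rmax 0 (t / c))) x).
  { intros x; apply (continuous_comp (fun t => t / c) (fun t => f (Rmax 0 t)));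
      [| apply continuous_clamp, Hf].
    apply (ex_derive_continuous (K := R_AbsRing) (V := R_NormedModule)); auto_derive; auto. }
  destruct (laplace_ext_pos (fun t => f (t / c)) (fun t => f (Rmax 0 (t / c))) p p Hfc) as [Ha' E];
    [| exact Ha |].
  { intros t Ht; unfold laplace_integrand; rewrite Rmax_right; [reflexivity |].
    apply Rdiv_le_0_compat; lra. }
  rewrite E; exact (laplace_comp_scal (fun t => f (Rmax 0 t)) c p Hc (continuous_clamp f Hf) Ha').
Qed.

(* G is only given on [0, +oo); extending it by G(0) to the left makes the kernel continuous. *)
Definition modulate (G : R -> C) (e : R) (t : R) : C := Cmult (G (Rmax 0 t)) (cexp (0, e * t)).

Lemma continuous_modulate G e : continuous_on_nonneg G -> forall x, continuous (modulate G e) x.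
Proof.
  intros HG x; apply continuous_Cmult; [apply continuous_clamp, HG | apply continuous_cexp_imag].
Qed.

Lemma laplace_modulate (G : R -> C) (e : R) s :
  continuous_on_nonneg G -> laplace_abs_conv G (- (Ci * e) + s)%C ->
  laplace_abs_conv (modulate G e) s /\ laplace G (- (Ci * e) + s)%C = laplace (modulate G e) s.
Proof.
  intros HG; apply laplace_ext_pos; [apply continuous_modulate, HG |].
  intros t Ht; unfold laplace_integrand, modulate; rewrite Rmax_right by lra.
  replace (cexp (- ((- (Ci * e) + s) * t))%C) with (Cmult (cexp (- (s * t))%C) (cexp (0, e * t))).
  - Cring.
  - rewrite <- cexp_plus; f_equal; destruct s; unfold Cplus, Copp, Cmult, Ci, RtoC; simpl.
    f_equal; ring.
Qed.

(* Frozen at its value at 0 for t < 0, so that it is continuous on R. *)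
Definition eigen_component (N : nat) (U : Mat) (V : R -> Mat) (a j : nat) (t : R) : C :=
  mmul N (madj U) (V (Rmax 0 t)) a j.

Lemma continuous_eigen_component N U V a j :
  (forall k, (k < N)%nat -> continuous_on_nonneg (fun t => V t k j)) ->
  forall x, continuous (eigen_component N U V a j) x.
Proof.
  intros HV x; apply (csum_continuous N (fun k t => Cconj (U k a) * V (Rmax 0 t) k j)%C).
  intros k Hk; apply continuous_Cmult;
    [apply continuous_const | apply (continuous_clamp (fun t => V t k j)), HV, Hk].
Qed.

Lemma eigen_component_0 N U V a j :
  meq N (V 0) mid -> (j < N)%nat -> eigen_component N U V a j 0 = Cconj (U j a).
Proof.
  intros HV Hj; unfold eigen_component; rewrite Rmax_left by lra.
  rewrite (mmul_meq_r N _ _ mid) by assumption; apply mmul_mid_r, Hj.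
Qed.

Lemma is_derive_eigen_component N U V a j t (d : nat -> C) :
  0 < t -> (forall k, (k < N)%nat -> is_derive_C (fun tau => V tau k j) t (d k)) ->
  is_derive_C (eigen_component N U V a j) t (csum N (fun k => Cconj (U k a) * d k)%C).
Proof.
  intros Ht Hd.
  apply (is_derive_ext_loc (fun tau => csum N (fun k => Cconj (U k a) * V tau k j)%C)).
  - exists (mkposreal t Ht); intros tau Htau.
    change (Rabs (tau - t) < t) in Htau; apply Rabs_def2 in Htau.
    unfold eigen_component; rewrite Rmax_right by lra; reflexivity.
  - apply is_derive_csum; intros k Hk; apply is_derive_Cscal, Hd, Hk.
Qed.

Lemma eigen_component_volterra N G U E lam V a j :
  is_solution N G U E lam V -> meq N (mmul N (madj U) U) mid -> (a < N)%nat -> (j < N)%nat ->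
  forall t, 0 < t ->
  is_derive_C (eigen_component N U V a j) t
    (RtoC (- lam ^ 2) * RInt_C (fun u => modulate G (E a) (t - u)%R
                                         * eigen_component N U V a j u) 0 t)%C.
Proof.
  intros [_ [_ Hsol]] HU Ha Hj t Ht.
  set (I := fun (k : nat) (u : R) => Cmult (G (t - u)) (mmul N (expiH N U E (t - u)) (V u) k j)).
  assert (HI : forall k, (k < N)%nat ->
            is_RInt_C (I k) 0 t (RInt_C (I k) 0 t) /\
            is_derive_C (fun tau => V tau k j) t (RtoC (- lam ^ 2) * RInt_C (I k) 0 t)%C).
  { intros k Hk; destruct (Hsol t Ht k j Hk Hj) as [D [HD1 HD2]].
    replace (RInt_C (I k) 0 t) with D
      by (symmetry; exact (is_RInt_unique (V := C_R_CompleteNormedModule) _ _ _ _ HD1)).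
    split; assumption. }
  eapply is_derive_ext_eq; [intro; reflexivity | |
    exact (is_derive_eigen_component N U V a j t _ Ht (fun k Hk => proj2 (HI k Hk)))].
  transitivity (RtoC (- lam ^ 2) * csum N (fun k => Cconj (U k a) * RInt_C (I k) 0 t))%C.
  { rewrite <- csum_scal_l; apply csum_ext; intros; Cring. }
  f_equal; symmetry; apply (is_RInt_unique (V := C_R_CompleteNormedModule)).
  eapply is_RInt_ext;
    [| exact (is_RInt_C_csum N (fun k u => Cconj (U k a) * I k u)%C _ 0 t
                (fun k Hk => is_RInt_Cscal _ _ _ _ _ (proj1 (HI k Hk))))].
  intros u Hu; rewrite Rmin_left, Rmax_right in Hu by lra.
  transitivity (Cmult (G (t - u)) (mmul N (madj U) (mmul N (expiH N U E (t - u)) (V u)) a j)).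
  { unfold mmul at 1; rewrite <- csum_scal_l; apply csum_ext; intros; unfold I, madj; Cring. }
  unfold expiH; rewrite madj_mmul_mfun by assumption.
  unfold modulate, eigen_component; rewrite !Rmax_right by lra; Cring.
Qed.

Lemma laplace_abs_conv_eigen_component N U V a j s :
  (forall k, (k < N)%nat -> continuous_on_nonneg (fun t => V t k j)) ->
  (forall k, (k < N)%nat -> laplace_abs_conv (fun t => V (Rmax 0 t) k j) s) ->
  laplace_abs_conv (eigen_component N U V a j) s.
Proof.
  intros Hc Ha.
  exact (proj1 (laplace_lincomb N (fun k => Cconj (U k a)) (fun k t => V (Rmax 0 t) k j) s
                  (fun k Hk => continuous_clamp _ (Hc k Hk)) Ha)).
Qed.

Lemma laplace_eigen_decomposition N U V i j s :
  meq N (mmul N U (madj U)) mid -> (i < N)%nat ->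
  (forall k, (k < N)%nat -> continuous_on_nonneg (fun t => V t k j)) ->
  (forall k, (k < N)%nat -> laplace_abs_conv (fun t => V (Rmax 0 t) k j) s) ->
  laplace (fun t => V (Rmax 0 t) i j) s
  = csum N (fun a => U i a * laplace (eigen_component N U V a j) s)%C.
Proof.
  intros HU Hi Hc Ha.
  replace (fun t => V (Rmax 0 t) i j)
    with (fun t => csum N (fun a => U i a * eigen_component N U V a j t)%C)
    by (apply functional_extensionality; intros t; exact (mmul_mmul_madj N U _ i j HU Hi)).
  apply (laplace_lincomb N (U i) (fun a => eigen_component N U V a j) s).
  - intros; apply continuous_eigen_component, Hc.
  - intros; apply laplace_abs_conv_eigen_component; assumption.
Qed.

Lemma eigen_component_laplace N G U E lam V p a j :
  continuous_on_nonneg G -> meq N (mmul N (madj U) U) mid -> is_solution N G U E lam V ->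
  (a < N)%nat -> (j < N)%nat ->
  (forall k, (k < N)%nat -> laplace_abs_conv (fun t => V (Rmax 0 t) k j) (RtoC (lam ^ 2) * p)%C) ->
  laplace_abs_conv G (- (Ci * E a) + RtoC (lam ^ 2) * p)%C ->
  (RtoC (lam ^ 2) * ((p + laplace G (- (Ci * E a) + RtoC (lam ^ 2) * p)%C)
              * laplace (eigen_component N U V a j) (RtoC (lam ^ 2) * p)%C))%C = Cconj (U j a).
Proof.
  intros HG HU Hsol Ha Hj HV HGa.
  pose proof Hsol as [HV0 [HVc _]].
  destruct (laplace_modulate G (E a) (RtoC (lam ^ 2) * p)%C HG HGa) as [Hga ->].
  rewrite <- (eigen_component_0 N U V a j HV0 Hj).
  rewrite <- (laplace_volterra (eigen_component N U V a j) (modulate G (E a)) (lam ^ 2)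
                (RtoC (lam ^ 2) * p)%C
               (continuous_eigen_component N U V a j (fun k Hk => HVc k j Hk Hj))
               (continuous_modulate G (E a) HG)
               (eigen_component_volterra N G U E lam V a j Hsol HU Ha Hj)
               (laplace_abs_conv_eigen_component N U V a j _ (fun k Hk => HVc k j Hk Hj) HV) Hga).
  Cring.
Qed.

Lemma unitary_resolvent_nonzero N (U : Mat) (c : R) (z : C) (l : nat -> C) a :
  meq N (mmul N (madj U) U) mid -> (a < N)%nat ->
  (forall j, (j < N)%nat -> (c * (z * l j))%C = Cconj (U j a)) -> z <> RtoC 0.
Proof.
  intros HU Ha Hl Hz; apply (unitary_column_nonzero N U a HU Ha); intros j Hj.
  rewrite <- (Cconj_conj (U j a)), <- Hl, Hz by exact Hj.
  replace (c * (RtoC 0 * l j))%C with (RtoC 0) by Cring.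
  unfold Cconj, RtoC; simpl; f_equal; ring.
Qed.

Theorem lemma2 (N : nat) (G : R -> C) (H0 H2 U : Mat) (E : nat -> R)
    (lam : R) (V : R -> Mat) (p : C) :
  continuous_on_nonneg G ->
  hermitian N H0 -> hermitian N H2 ->
  0 < lam ->
  (* H_S = H0 + lam^2 H2 = U diag(E_alpha) U^dagger with U unitary, E_alpha real *)
  unitary N U ->
  meq N (madd H0 (mscal (RtoC (lam ^ 2)) H2)) (mmul N (mmul N U (mdiag (fun a => RtoC (E a)))) (madj U)) ->
  is_solution N G U E lam V ->
  (* the Laplace integrals involved converge (absolutely) *)
  (forall i j, (i < N)%nat -> (j < N)%nat ->
     laplace_abs_conv (fun t => V (t / lam ^ 2) i j) p) ->
  (forall a, (a < N)%nat ->
     laplace_abs_conv G (Cplus (Copp (Cmult Ci (RtoC (E a)))) (Cmult (RtoC (lam ^ 2)) p))) ->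
  meq N (fun i j => laplace (fun t => V (t / lam ^ 2) i j) p)
        (mfun N U E (fun e =>
           Cinv (Cplus p (laplace G (Cplus (Copp (Cmult Ci (RtoC e))) (Cmult (RtoC (lam ^ 2)) p)))))).
Proof.
  (* H0 and H2 only serve to name H_S = U diag(E) U^dagger, in which is_solution is stated. *)
  intros HG _ _ Hlam [HUUt HUtU] _ Hsol HVc HGc i j Hi Hj.
  assert (Hc : 0 < lam ^ 2) by (apply pow_lt; lra).
  pose proof Hsol as [_ [HV _]].
  assert (Hresc := fun k l Hk Hl =>
            laplace_rescale (fun t => V t k l) (lam ^ 2) p Hc (HV k l Hk Hl) (HVc k l Hk Hl)).
  assert (Key := fun a l Ha Hl => eigen_component_laplace N G U E lam V p a l HG HUtU Hsol Ha Hl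
                   (fun k Hk => proj1 (Hresc k l Hk Hl)) (HGc a Ha)).
  cbv beta; rewrite (proj2 (Hresc i j Hi Hj)).
  rewrite (laplace_eigen_decomposition N U V i j _ HUUt Hi (fun k Hk => HV k j Hk Hj)
             (fun k Hk => proj1 (Hresc k j Hk Hj))).
  rewrite mfun_entry, <- csum_scal_l; apply csum_ext; intros a Ha.
  rewrite <- (Key a j Ha Hj); field.
  exact (unitary_resolvent_nonzero N U _ _ _ a HUtU Ha (fun l Hl => Key a l Ha Hl)).
Qed.
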